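(* Under the hypotheses of the preceding proposition (equation for Whiting's transform) and assuming moreover $\operatorname{Im}\omega>0$, the transform $\tilde u$ satisfies, with $x^*=r^*(x)$ and primes denoting $d/dx^*$: (1) $\tilde u=O\big((x-r_+)^{2M\operatorname{Im}\omega}\big)$ and (2) $\tilde u'=O\big((x-r_+)^{2M\operatorname{Im}\omega}\big)$ as $x\to r_+$; (3) $\tilde u=O\big(e^{-\operatorname{Im}(\omega)x}x^{1+2M\operatorname{Im}\omega}\big)$ and (4) $\tilde u'=O\big(e^{-\operatorname{Im}(\omega)x}x^{1+2M\operatorname{Im}\omega}\big)$ as $x\to\infty$.
   Context: Fix $M>0$ and $a\in\mathbb{R}$ with $|a|<M$. Let $r_\pm:=M\pm\sqrt{M^2-a^2}$ and $\Delta(r):=r^2-2Mr+a^2=(r-r_+)(r-r_-)$. Let $r^*:(r_+,\infty)\to(-\infty,\infty)$ be a fixed increasing bijection with $\frac{dr^*}{dr}=\frac{r^2+a^2}{\Delta}$; a prime $'$ denotes $d/dr^*$. Complex powers $(r-r_\pm)^c$ mean $e^{c\log(r-r_\pm)}$ with the real logarithm. Radial ODE: given $\omega,m,\lambda$, set $V:=\frac{4Mram\omega-a^2m^2+\Delta(\lambda+a^2\omega^2)}{(r^2+a^2)^2}+\frac{\Delta}{(r^2+a^2)^4}\big(a^2\Delta+2Mr(r^2-a^2)\big)$. Hypotheses: $\omega\in\mathbb{C}$, $m\in\mathbb{Z}$, $\lambda\in\mathbb{C}$, $F$ smooth and compactly supported in $(r_+,\infty)$ (possibly $0$), $u$ solves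 $u''+(\omega^2-V)u=\frac{\Delta}{(r^2+a^2)^{1/2}}F$ and satisfies the mode boundary conditions: with $\xi:=\frac{i(am-2Mr_+\omega)}{r_+-r_-}$, (i) $(r-r_+)^{-\xi}u$ extends smoothly in $r$ to $r=r_+$; (ii) for constants $C_i$ and every $N$, $u=e^{i\omega r^*}\sum_{i=0}^NC_ir^{-i}+O(r^{-N-1})$ as $r\to\infty$. $R:=(r^2+a^2)^{-1/2}u$. Whiting's transform: with $\eta:=\frac{-i(am-2Mr_-\omega)}{r_+-r_-}$, $\tilde u(x^* ):=(x^2+a^2)^{1/2}(x-r_+)^{-2iM\omega}e^{-i\omega x}\int_{r_+}^\infty e^{\frac{2i\omega}{r_+-r_-}(x-r_-)(r-r_-)}(r-r_-)^{\eta}(r-r_+)^{\xi}e^{-i\omega r}R(r)\,dr$, $x\in(r_+,\infty)$, $x^*=r^*(x)$. *)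

From Stdlib Require Import Reals Lra ClassicalEpsilon.
Open Scope R_scope.

Definition Cx := (R * R)%type.
Definition RtoC (x : R) : Cx := (x, 0).
Definition Cadd (z w : Cx) : Cx := (fst z + fst w, snd z + snd w).
Definition Copp (z : Cx) : Cx := (- fst z, - snd z).
Definition Csub (z w : Cx) : Cx := Cadd z (Copp w).
Definition Cmul (z w : Cx) : Cx :=
  (fst z * fst w - snd z * snd w, fst z * snd w + snd z * fst w).
Definition Cscal (t : R) (z : Cx) : Cx := (t * fst z, t * snd z).
Definition Ci : Cx := (0, 1).
Definition Cnorm (z : Cx) : R := sqrt (fst z ^ 2 + snd z ^ 2).
Definition Cexp (z : Cx) : Cx := (exp (fst z) * cos (snd z), exp (fst z) * sin (snd z)).
Definition Cpow_pos (t : R) (c : Cx) : Cx := Cexp (Cscal (ln t) c).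
Fixpoint Csum (f : nat -> Cx) (N : nat) : Cx :=
  match N with
  | O => f O
  | S n => Cadd (Csum f n) (f (S n))
  end.

Definition Cderiv_at (f : R -> Cx) (x : R) (l : Cx) : Prop :=
  derivable_pt_lim (fun y => fst (f y)) x (fst l) /\
  derivable_pt_lim (fun y => snd (f y)) x (snd l).

Definition smooth_on_right (lo : R) (f : R -> Cx) : Prop :=
  exists D : nat -> R -> Cx,
    (forall x, lo < x -> D O x = f x) /\
    (forall n x, lo < x -> Cderiv_at (D n) x (D (S n) x)).

(** the restriction of f to (lo, hi) extends smoothly to [lo, hi):
    D 0 is the extension, D n its n-th derivative, all continuous up to lo *)
Definition smooth_ext_left (lo hi : R) (f : R -> Cx) : Prop :=
  exists D : nat -> R -> Cx,
    (forall x, lo < x < hi -> D O x = f x) /\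
    (forall n x, lo < x < hi -> Cderiv_at (D n) x (D (S n) x)) /\
    (forall n eps, 0 < eps -> exists d, 0 < d /\
        forall x, lo < x < lo + d -> x < hi -> Cnorm (Csub (D n x) (D n lo)) < eps).

Definition compact_support_right (lo : R) (f : R -> Cx) : Prop :=
  exists A B, lo < A /\ A <= B /\ forall x, lo < x -> (x < A \/ B < x) -> f x = (0, 0).

Definition improper_integral_R (f : R -> R) (lo v : R) : Prop :=
  forall eps, 0 < eps -> exists d B, 0 < d /\
    forall a b, lo < a < lo + d -> B < b ->
      exists pr : Riemann_integrable f a b, Rabs (RiemannInt pr - v) < eps.

Definition improper_integral (f : R -> Cx) (lo : R) (I : Cx) : Prop :=
  improper_integral_R (fun r => fst (f r)) lo (fst I) /\
  improper_integral_R (fun r => snd (f r)) lo (snd I).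

Definition CimpInt (f : R -> Cx) (lo : R) : Cx :=
  epsilon (inhabits (0, 0)) (fun I => improper_integral f lo I).

Definition rplus (M a : R) : R := M + sqrt (M ^ 2 - a ^ 2).
Definition rminus (M a : R) : R := M - sqrt (M ^ 2 - a ^ 2).
Definition Delta (M a r : R) : R := r ^ 2 - 2 * M * r + a ^ 2.

Definition tortoise (M a : R) (rstar : R -> R) : Prop :=
  (forall r, rplus M a < r -> derivable_pt_lim rstar r ((r ^ 2 + a ^ 2) / Delta M a r)) /\
  (forall r1 r2, rplus M a < r1 -> r1 < r2 -> rstar r1 < rstar r2) /\
  (forall s, exists r, rplus M a < r /\ rstar r = s).

(** g is the derivative d/d r^* of f, both viewed as functions of r in (lo, oo):
    g(x) = lim_{y -> x} (f y - f x) / (r^*(y) - r^*(x)) *)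
Definition dstar (rstar : R -> R) (lo : R) (f g : R -> Cx) : Prop :=
  forall x, lo < x -> forall eps, 0 < eps -> exists d, 0 < d /\
    forall y, lo < y -> y <> x -> Rabs (y - x) < d ->
      Cnorm (Csub (Cscal (/ (rstar y - rstar x)) (Csub (f y) (f x))) (g x)) < eps.

Definition Vpot (M a : R) (om : Cx) (m : Z) (lam : Cx) (r : R) : Cx :=
  Cadd
    (Cscal (/ (r ^ 2 + a ^ 2) ^ 2)
       (Cadd (Cadd (Cscal (4 * M * r * a * IZR m) om) (RtoC (- (a ^ 2 * IZR m ^ 2))))
             (Cscal (Delta M a r) (Cadd lam (Cscal (a ^ 2) (Cmul om om))))))
    (RtoC (Delta M a r / (r ^ 2 + a ^ 2) ^ 4 *
           (a ^ 2 * Delta M a r + 2 * M * r * (r ^ 2 - a ^ 2)))).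

Definition xi (M a : R) (om : Cx) (m : Z) : Cx :=
  Cscal (/ (rplus M a - rminus M a))
        (Cmul Ci (Csub (RtoC (a * IZR m)) (Cscal (2 * M * rplus M a) om))).
Definition eta (M a : R) (om : Cx) (m : Z) : Cx :=
  Cscal (/ (rplus M a - rminus M a))
        (Cmul (Copp Ci) (Csub (RtoC (a * IZR m)) (Cscal (2 * M * rminus M a) om))).

(** u (as a function of r) solves  u'' + (om^2 - V) u = Delta/(r^2+a^2)^{1/2} F, ' = d/dr^* *)
Definition radial_ode (M a : R) (rstar : R -> R) (om : Cx) (m : Z) (lam : Cx)
    (F u : R -> Cx) : Prop :=
  exists u1 u2 : R -> Cx,
    dstar rstar (rplus M a) u u1 /\ dstar rstar (rplus M a) u1 u2 /\
    forall r, rplus M a < r ->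
      Cadd (u2 r) (Cmul (Csub (Cmul om om) (Vpot M a om m lam r)) (u r)) =
      Cscal (Delta M a r / sqrt (r ^ 2 + a ^ 2)) (F r).

Definition bc_horizon (M a : R) (om : Cx) (m : Z) (u : R -> Cx) : Prop :=
  exists d, 0 < d /\
    smooth_ext_left (rplus M a) (rplus M a + d)
      (fun r => Cmul (Cpow_pos (r - rplus M a) (Copp (xi M a om m))) (u r)).

Definition bc_infinity (M a : R) (rstar : R -> R) (om : Cx) (u : R -> Cx) : Prop :=
  exists Cs : nat -> Cx, forall N : nat, exists K X, forall r, X < r -> rplus M a < r ->
    Cnorm (Csub (u r)
             (Cmul (Cexp (Cmul Ci (Cscal (rstar r) om)))
                   (Csum (fun i => Cscal (/ r ^ i) (Cs i)) N)))
    <= K * / r ^ (S N).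

(** Whiting's transform, as a function of x in (r_+, oo)  (value at x^* = r^*(x)) *)
Definition whiting_integrand (M a : R) (om : Cx) (m : Z) (u : R -> Cx) (x r : R) : Cx :=
  let rp := rplus M a in let rm := rminus M a in
  Cmul (Cexp (Cscal (2 * (x - rm) * (r - rm) / (rp - rm)) (Cmul Ci om)))
  (Cmul (Cpow_pos (r - rm) (eta M a om m))
  (Cmul (Cpow_pos (r - rp) (xi M a om m))
  (Cmul (Cexp (Cmul (Copp Ci) (Cscal r om)))
        (Cscal (/ sqrt (r ^ 2 + a ^ 2)) (u r))))).

Definition whiting (M a : R) (om : Cx) (m : Z) (u : R -> Cx) (x : R) : Cx :=
  let rp := rplus M a in
  Cscal (sqrt (x ^ 2 + a ^ 2))
   (Cmul (Cpow_pos (x - rp) (Cscal (-2 * M) (Cmul Ci om)))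
   (Cmul (Cexp (Cmul (Copp Ci) (Cscal x om)))
         (CimpInt (whiting_integrand M a om m u x) rp))).

Definition bigO_horizon (rp p : R) (f : R -> Cx) : Prop :=
  exists K d, 0 < d /\ forall x, rp < x < rp + d -> Cnorm (f x) <= K * Rpower (x - rp) p.

Definition bigO_infinity (rp k p : R) (f : R -> Cx) : Prop :=
  exists K X, forall x, X < x -> rp < x -> Cnorm (f x) <= K * (exp (- k * x) * Rpower x p).

From Stdlib Require Import Reals ZArith Lra Psatz ClassicalEpsilon FunctionalExtensionality.
From Coquelicot Require Import Coquelicot.
Open Scope R_scope.

(** Write [w = Im om > 0], [L = r_+ - r_-], and let
      [G(r) = (r - r_-)^eta (r - r_+)^xi e^{-i om r} u(r) / sqrt(r^2 + a^2)]
    be the amplitude of Whiting's integrand, so that the transform is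
      [W(x) = sqrt(x^2 + a^2) (x - r_+)^{-2iM om} e^{-i om x} I(x)],
      [I(x) = int_{r_+}^oo e^{i om k(x, r)} G(r) dr],  [k(x, r) = 2 (x - r_-)(r - r_-) / L].
    1. The ODE makes [u] continuous; the boundary conditions bound it near [r_+]
       (as [Re xi >= 0]) and near infinity (as [|e^{i om r^*}|] decreases), so
       [|G(r)| <= C exp (5/4 w (r - r_+))] ([amplitude_bound]).
    2. As [Re (i om k) <= -2 w (x - r_-) - 2 w (r - r_+)], the integrand, and its first
       two [x]-derivatives, decay like [e^{-w (r - r_+)/4}] uniformly in [x]. Hence [I]
       and the integral [I1] of the [x]-derivative converge, [|I|, |I1| <= B e^{-2 w x}],
       and [I' = I1] by differentiation under the integral sign.
    3. Then [|W(x)|] and [|dW/dx^*| = Delta/(x^2+a^2) |dW/dx|] are bounded by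
       [C (x - r_+)^{2 M w} (1 + x) e^{-w x}], which gives the four estimates. *)

Lemma Cpair_eq (z w : Cx) : fst z = fst w -> snd z = snd w -> z = w.
Proof. destruct z, w; simpl; intros; subst; auto. Qed.

Lemma Cnorm_ge0 z : 0 <= Cnorm z.
Proof. exact (Cmod_ge_0 z). Qed.

Lemma Cnorm_mul z w : Cnorm (Cmul z w) = Cnorm z * Cnorm w.
Proof. exact (Cmod_mult z w). Qed.

Lemma Cnorm_add z w : Cnorm (Cadd z w) <= Cnorm z + Cnorm w.
Proof. exact (Cmod_triangle z w). Qed.

Lemma Cnorm_sub_le z w : Cnorm z <= Cnorm (Csub z w) + Cnorm w.
Proof.
  replace z with (Cadd (Csub z w) w) at 1 by (apply Cpair_eq; simpl; ring).
  apply Cnorm_add.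
Qed.

Lemma Cnorm_fst z : Rabs (fst z) <= Cnorm z.
Proof. generalize (Rmax_Cmod z) (Rmax_l (Rabs (fst z)) (Rabs (snd z))). unfold Cnorm, Cmod. lra. Qed.

Lemma Cnorm_snd z : Rabs (snd z) <= Cnorm z.
Proof. generalize (Rmax_Cmod z) (Rmax_r (Rabs (fst z)) (Rabs (snd z))). unfold Cnorm, Cmod. lra. Qed.

Lemma Cnorm_le_sum z : Cnorm z <= Rabs (fst z) + Rabs (snd z).
Proof.
  destruct z as [x y]. unfold Cnorm; simpl.
  apply Rsqr_incr_0_var; [|generalize (Rabs_pos x) (Rabs_pos y); lra].
  rewrite Rsqr_sqrt by nra. generalize (Rsqr_abs x) (Rsqr_abs y). unfold Rsqr.
  generalize (Rabs_pos x) (Rabs_pos y). nra.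
Qed.

Lemma Cnorm_scal t z : Cnorm (Cscal t z) = Rabs t * Cnorm z.
Proof.
  destruct z as [x y]. unfold Cnorm, Cscal; cbn [fst snd].
  replace ((t * x) ^ 2 + (t * y) ^ 2) with (t ^ 2 * (x ^ 2 + y ^ 2)) by ring.
  rewrite sqrt_mult by nra. rewrite <- pow2_abs, sqrt_pow2 by apply Rabs_pos. reflexivity.
Qed.

Lemma Cnorm_exp z : Cnorm (Cexp z) = exp (fst z).
Proof.
  unfold Cnorm, Cexp; cbn [fst snd].
  replace ((exp (fst z) * cos (snd z)) ^ 2 + (exp (fst z) * sin (snd z)) ^ 2)
    with (exp (fst z) ^ 2 * (sin (snd z) ^ 2 + cos (snd z) ^ 2)) by ring.
  rewrite <- !Rsqr_pow2, sin2_cos2, Rmult_1_r. apply sqrt_Rsqr. left; apply exp_pos.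
Qed.

Lemma Cnorm_pow t c : Cnorm (Cpow_pos t c) = exp (fst c * ln t).
Proof. unfold Cpow_pos. rewrite Cnorm_exp. simpl. f_equal; ring. Qed.

Definition Ccont (f : R -> Cx) (r : R) : Prop :=
  continuity_pt (fun y => fst (f y)) r /\ continuity_pt (fun y => snd (f y)) r.

Lemma continuity_pt_of_ex_derive f x : ex_derive f x -> continuity_pt f x.
Proof. intros [l H]. apply derivable_continuous_pt. exists l. now apply is_derive_Reals. Qed.

Lemma Ccont_const z r : Ccont (fun _ => z) r.
Proof. split; apply continuity_pt_const; intros ? ?; reflexivity. Qed.

Lemma Ccont_mul f g r : Ccont f r -> Ccont g r -> Ccont (fun y => Cmul (f y) (g y)) r.
Proof.
  intros [f1 f2] [g1 g2]; split; simpl.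
  - apply continuity_pt_minus; apply continuity_pt_mult; auto.
  - apply continuity_pt_plus; apply continuity_pt_mult; auto.
Qed.

Lemma Ccont_scal s f r : continuity_pt s r -> Ccont f r -> Ccont (fun y => Cscal (s y) (f y)) r.
Proof. intros hs [f1 f2]; split; simpl; apply continuity_pt_mult; auto. Qed.

Lemma Ccont_exp f r : Ccont f r -> Ccont (fun y => Cexp (f y)) r.
Proof.
  intros [f1 f2].
  assert (Hexp : continuity_pt (fun y => exp (fst (f y))) r).
  { apply (continuity_pt_comp (fun y => fst (f y)) exp); auto.
    apply derivable_continuous_pt, derivable_pt_exp. }
  split; simpl; apply continuity_pt_mult; auto.
  - apply (continuity_pt_comp (fun y => snd (f y)) cos); auto.
    apply derivable_continuous_pt, derivable_pt_cos.
  - apply (continuity_pt_comp (fun y => snd (f y)) sin); auto.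
    apply derivable_continuous_pt, derivable_pt_sin.
Qed.

Lemma Ccont_pow c z r : c < r -> Ccont (fun y => Cpow_pos (y - c) z) r.
Proof.
  intros H. unfold Cpow_pos. apply Ccont_exp, Ccont_scal; [|apply Ccont_const].
  apply continuity_pt_of_ex_derive. auto_derive. lra.
Qed.

Lemma Ccont_norm f r : Ccont f r -> continuity_pt (fun y => Cnorm (f y)) r.
Proof.
  intros [f1 f2]. unfold Cnorm.
  apply (continuity_pt_comp (fun y => fst (f y) ^ 2 + snd (f y) ^ 2) sqrt).
  - apply continuity_pt_plus; apply continuity_pt_mult; auto;
      apply continuity_pt_mult; auto; apply continuity_pt_const; intros ? ?; reflexivity.
  - apply continuity_pt_sqrt. nra.
Qed.

Lemma Cderiv_ext f g x l : (forall y, f y = g y) -> Cderiv_at f x l -> Cderiv_at g x l.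
Proof. intros H. replace g with f; auto. now apply functional_extensionality. Qed.

Lemma Cderiv_const z x : Cderiv_at (fun _ => z) x (0, 0).
Proof. split; apply derivable_pt_lim_const. Qed.

Lemma Cderiv_mul f g x lf lg : Cderiv_at f x lf -> Cderiv_at g x lg ->
  Cderiv_at (fun y => Cmul (f y) (g y)) x (Cadd (Cmul lf (g x)) (Cmul (f x) lg)).
Proof.
  intros [f1 f2] [g1 g2]; split; simpl.
  - replace (_ + _) with (fst lf * fst (g x) + fst (f x) * fst lg
                         - (snd lf * snd (g x) + snd (f x) * snd lg)) by ring.
    exact (derivable_pt_lim_minus _ _ _ _ _
             (derivable_pt_lim_mult _ _ _ _ _ f1 g1) (derivable_pt_lim_mult _ _ _ _ _ f2 g2)).
  - replace (_ + _) with (fst lf * snd (g x) + fst (f x) * snd lg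
                         + (snd lf * fst (g x) + snd (f x) * fst lg)) by ring.
    exact (derivable_pt_lim_plus _ _ _ _ _
             (derivable_pt_lim_mult _ _ _ _ _ f1 g2) (derivable_pt_lim_mult _ _ _ _ _ f2 g1)).
Qed.

Lemma Cderiv_scal s f x ls lf : derivable_pt_lim s x ls -> Cderiv_at f x lf ->
  Cderiv_at (fun y => Cscal (s y) (f y)) x (Cadd (Cscal ls (f x)) (Cscal (s x) lf)).
Proof.
  intros hs [f1 f2]; split; simpl.
  - exact (derivable_pt_lim_mult _ _ _ _ _ hs f1).
  - exact (derivable_pt_lim_mult _ _ _ _ _ hs f2).
Qed.

Lemma Cderiv_expo h c x lh : derivable_pt_lim h x lh ->
  Cderiv_at (fun y => Cexp (Cscal (h y) c)) x (Cscal lh (Cmul c (Cexp (Cscal (h x) c)))).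
Proof.
  intros Hh. apply is_derive_Reals in Hh.
  assert (Ex : ex_derive h x) by (exists lh; exact Hh).
  split; apply is_derive_Reals; unfold Cexp, Cscal, Cmul; simpl; auto_derive;
    try replace (Derive (fun y => h y) x) with lh by (symmetry; now apply is_derive_unique); auto; ring.
Qed.

Lemma exp_mono x y : x <= y -> exp x <= exp y.
Proof. intros [H|H]; [left; now apply exp_increasing | subst; lra]. Qed.

Lemma mult_le_compat_nonneg x1 x2 y1 y2 : 0 <= x1 <= x2 -> 0 <= y1 <= y2 -> x1 * y1 <= x2 * y2.
Proof. intros. apply Rmult_le_compat; lra. Qed.

Lemma sqrt_ge_r r a : 0 < r -> r <= sqrt (r ^ 2 + a ^ 2).
Proof. intros Hr. rewrite <- (sqrt_pow2 r) at 1 by lra. apply sqrt_le_1_alt. nra. Qed.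

Lemma nat_large A : exists N : nat, A < INR N.
Proof.
  destruct (archimed (Rabs A)) as [H1 _].
  exists (Z.to_nat (up (Rabs A))).
  rewrite INR_IZR_INZ, Z2Nat.id; [generalize (Rle_abs A); lra|].
  apply le_IZR. generalize (Rabs_pos A). lra.
Qed.

Lemma power_below_exponential p beta t : 0 <= p -> 0 < beta -> 0 < t ->
  exp (p * ln t) <= exp (p * ln ((p + 1) / beta)) * exp (beta * t).
Proof.
  intros Hp Hb Ht. rewrite <- exp_plus. apply exp_mono.
  assert (Hs : 0 < beta * t / (p + 1)) by (apply Rdiv_lt_0_compat; nra).
  replace (ln t) with (ln (beta * t / (p + 1)) + ln ((p + 1) / beta))
    by (rewrite <- ln_mult by (first [exact Hs | apply Rdiv_lt_0_compat; lra]); f_equal; field; lra).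
  assert (Hln : ln (beta * t / (p + 1)) <= beta * t / (p + 1))
    by (generalize (exp_ineq1_le (ln (beta * t / (p + 1)))); rewrite exp_ln by exact Hs; lra).
  assert (p * (beta * t / (p + 1)) <= beta * t).
  { replace (p * (beta * t / (p + 1))) with (beta * t * (p / (p + 1))) by (field; lra).
    assert (p / (p + 1) <= 1) by (apply Rle_div_l; lra).
    assert (0 <= beta * t) by nra. nra. }
  assert (p * ln (beta * t / (p + 1)) <= p * (beta * t / (p + 1))) by (apply Rmult_le_compat_l; lra).
  lra.
Qed.

Lemma linear_times_exp_bound beta t : 0 < beta -> 0 <= t -> t * exp (- beta * t) <= / beta.
Proof.
  intros Hb Ht. assert (h := exp_ineq1_le (beta * t)).
  assert (h2 : exp (- beta * t) * exp (beta * t) = 1)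
    by (rewrite <- exp_plus; replace (- beta * t + beta * t) with 0 by ring; apply exp_0).
  assert (h3 := exp_pos (- beta * t)).
  apply (Rmult_le_reg_l beta); auto. rewrite Rinv_r by lra. nra.
Qed.

Lemma cauchy_two_sided_limit (Phi : R -> R -> R) (lo : R) :
  (forall eps, 0 < eps -> exists d B, 0 < d /\ forall a b a' b',
      lo < a < lo + d -> lo < a' < lo + d -> B < b -> B < b' ->
      Rabs (Phi a b - Phi a' b') < eps) ->
  exists v, forall eps, 0 < eps -> exists d B, 0 < d /\ forall a b,
      lo < a < lo + d -> B < b -> Rabs (Phi a b - v) < eps.
Proof.
  intros H.
  set (w := fun n : nat => Phi (lo + / (INR n + 1)) (INR n)).
  assert (Hsel : forall d B, 0 < d -> exists N, forall n, (N <= n)%nat ->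
     lo < lo + / (INR n + 1) < lo + d /\ B < INR n).
  { intros d B Hd. destruct (nat_large (Rmax B (/ d))) as [N HN].
    exists N. intros n Hn. apply le_INR in Hn.
    generalize (Rmax_l B (/ d)) (Rmax_r B (/ d)); intros HB Hd'.
    assert (0 < / d) by (apply Rinv_0_lt_compat; lra).
    assert (0 < / (INR n + 1)) by (apply Rinv_0_lt_compat; lra).
    assert (/ (INR n + 1) < d).
    { rewrite <- (Rinv_inv d). apply Rinv_lt_contravar; [|lra].
      apply Rmult_lt_0_compat; [apply Rinv_0_lt_compat|]; lra. }
    repeat split; lra. }
  assert (Hc : Cauchy_crit w).
  { intros eps Heps. destruct (H eps Heps) as [d [B [Hd HB]]].
    destruct (Hsel d B Hd) as [N HN]. exists N. intros n m Hn Hm.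
    unfold R_dist, w. destruct (HN n Hn), (HN m Hm). apply HB; auto. }
  destruct (Rcomplete.R_complete w Hc) as [v Hv]. exists v.
  intros eps Heps. destruct (H (eps / 2)) as [d [B [Hd HB]]]; [lra|].
  exists d, B. split; auto. intros a b Ha Hb.
  destruct (Hsel d B Hd) as [N HN]. destruct (Hv (eps / 2)) as [N1 HN1]; [lra|].
  set (n := max N N1).
  destruct (HN n (Nat.le_max_l _ _)) as [Hn1 Hn2].
  assert (h2 := HN1 n (Nat.le_max_r _ _)). unfold R_dist, w in h2.
  assert (h3 := HB a b _ _ Ha Hn1 Hb Hn2).
  replace (Phi a b - v) with ((Phi a b - Phi (lo + / (INR n + 1)) (INR n)) +
     (Phi (lo + / (INR n + 1)) (INR n) - v)) by ring.
  eapply Rle_lt_trans; [apply Rabs_triang | lra].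
Qed.

Section ExponentiallyDominated.
Variables (f : R -> R) (lo C mu : R).
Hypothesis mu_pos : 0 < mu.
Hypothesis f_dominated : forall r, lo < r -> Rabs (f r) <= C * exp (- mu * (r - lo)).

Let E z := exp (- mu * (z - lo)).

Lemma dominating_constant_nonneg : 0 <= C.
Proof.
  assert (h := f_dominated (lo + 1) ltac:(lra)).
  generalize (exp_pos (- mu * (lo + 1 - lo))) (Rabs_pos (f (lo + 1))). nra.
Qed.

Lemma is_RInt_dominant a b : is_RInt (fun r => C * E r) a b (C / mu * (E a - E b)).
Proof.
  replace (C / mu * (E a - E b)) with (minus (- C / mu * E b) (- C / mu * E a))
    by (unfold minus, plus, opp; simpl; field; lra).
  apply (is_RInt_derive (fun r => - C / mu * E r)); intros x _; unfold E.
  - auto_derive; auto. replace (x + - lo) with (x - lo) by ring. field. lra.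
  - apply continuity_pt_filterlim, continuity_pt_of_ex_derive. auto_derive. auto.
Qed.

Lemma RInt_dominated a b : lo < a <= b -> ex_RInt f a b ->
  Rabs (RInt f a b) <= C / mu * (E a - E b).
Proof.
  intros Hab Hex.
  assert (Hg := is_RInt_dominant a b).
  assert (Hg' := is_RInt_opp _ _ _ _ Hg).
  apply Rabs_le; split.
  - apply Rle_trans with (RInt (fun r => opp (C * E r)) a b);
      [rewrite (is_RInt_unique (fun r => opp (C * E r)) a b _ Hg'); right; reflexivity|].
    apply RInt_le; [lra | exact (ex_intro _ _ Hg') | exact Hex|].
    intros x Hx. destruct (proj1 (Rabs_le_between _ _) (f_dominated x ltac:(lra))).
    unfold opp, E; simpl; lra.
  - rewrite <- (is_RInt_unique _ _ _ _ Hg).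
    apply RInt_le; [lra | exact Hex | exact (ex_intro _ _ Hg)|].
    intros x Hx. destruct (proj1 (Rabs_le_between _ _) (f_dominated x ltac:(lra))).
    unfold opp, E; simpl; lra.
Qed.

Lemma RInt_dominated_abs x y : lo < x -> lo < y -> ex_RInt f x y ->
  Rabs (RInt f x y) <= C / mu * Rabs (E x - E y).
Proof.
  intros Hx Hy Hex.
  assert (HK : 0 <= C / mu)
    by (apply Rdiv_le_0_compat; [apply dominating_constant_nonneg | lra]).
  destruct (Rle_or_lt x y).
  - eapply Rle_trans; [apply RInt_dominated; auto; lra|].
    apply Rmult_le_compat_l; [lra | apply Rle_abs].
  - rewrite <- (opp_RInt_swap f y x) by now apply ex_RInt_swap.
    change (Rabs (- RInt f y x) <= C / mu * Rabs (E x - E y)).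
    rewrite Rabs_Ropp, Rabs_minus_sym.
    eapply Rle_trans; [apply RInt_dominated; [lra | now apply ex_RInt_swap]|].
    apply Rmult_le_compat_l; [lra | apply Rle_abs].
Qed.

(** The improper integral is bounded by [int_lo^oo C E = C / mu]. *)
Lemma improper_value_bound v : improper_integral_R f lo v -> Rabs v <= C / mu.
Proof.
  intros Hi. apply Rle_plus_epsilon. intros eps Heps.
  destruct (Hi eps Heps) as [d [B [Hd HB]]].
  set (a := lo + Rmin d 1 / 2). set (b := Rmax B (lo + 1) + 1).
  generalize (Rmin_l d 1) (Rmin_r d 1) (Rmax_l B (lo + 1)) (Rmax_r B (lo + 1)); intros.
  assert (0 < Rmin d 1) by (apply Rmin_glb_lt; lra).
  destruct (HB a b) as [pr Hpr]; [unfold a; lra | unfold b; lra|].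
  rewrite <- RInt_Reals in Hpr.
  assert (h := RInt_dominated a b ltac:(unfold a, b; lra) (ex_RInt_Reals_1 _ _ _ pr)).
  assert (E a <= 1) by (rewrite <- exp_0; apply exp_mono; unfold a; nra).
  assert (0 < E b) by apply exp_pos.
  assert (0 <= C / mu)
    by (apply Rdiv_le_0_compat; [apply dominating_constant_nonneg | lra]).
  generalize (Rabs_triang_inv v (RInt f a b)). rewrite Rabs_minus_sym in Hpr. nra.
Qed.

Hypothesis f_cont : forall r, lo < r -> continuity_pt f r.

Lemma ex_RInt_right a b : lo < a -> lo < b -> ex_RInt f a b.
Proof.
  intros Ha Hb. apply (ex_RInt_continuous (V := R_CompleteNormedModule)). intros z Hz.
  apply continuity_pt_filterlim, f_cont.
  assert (Rmin a b > lo) by (apply Rmin_glb_lt; auto). lra.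
Qed.

Lemma dominant_near_lo z d : lo < z < lo + d -> 1 - mu * d <= E z <= 1.
Proof.
  intros Hz. unfold E. split.
  - eapply Rle_trans; [|apply exp_ineq1_le]. nra.
  - rewrite <- exp_0. apply exp_mono. nra.
Qed.

Lemma dominant_far z B : lo < B < z -> 0 < E z <= / (mu * (B - lo)).
Proof.
  intros Hz. split; [apply exp_pos|]. unfold E.
  assert (0 < mu * (B - lo)) by nra.
  rewrite <- (Rinv_inv (exp _)). apply Rinv_le_contravar; auto.
  rewrite <- exp_Ropp. eapply Rle_trans; [|apply exp_ineq1_le]. nra.
Qed.

(** Cauchy criterion: [int_a^b f] varies by at most [C/mu (|E a - E a'| + |E b - E b'|)]. *)
Lemma improper_integral_exists : exists v, improper_integral_R f lo v.
Proof.
  set (K := C / mu).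
  assert (HK : 0 <= K)
    by (apply Rdiv_le_0_compat; [apply dominating_constant_nonneg | lra]).
  destruct (cauchy_two_sided_limit (fun a b => RInt f a b) lo) as [v Hv].
  - intros eps Heps.
    set (d := eps / (2 * mu * (K + 1))). set (B := lo + 2 * (K + 1) / (mu * eps)).
    assert (Hd : 0 < d) by (unfold d; apply Rdiv_lt_0_compat; nra).
    assert (HB : lo < B) by (unfold B; assert (0 < 2 * (K + 1) / (mu * eps))
                                by (apply Rdiv_lt_0_compat; nra); lra).
    exists d, B. split; auto. intros a b a' b' Ha Ha' Hb Hb'.
    replace (RInt f a b - RInt f a' b') with (RInt f a a' + RInt f b' b).
    2: { rewrite <- (RInt_Chasles f a a' b), <- (RInt_Chasles f a' b' b)
           by (apply ex_RInt_right; lra). unfold plus; simpl; ring. }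
    assert (h1 := RInt_dominated_abs a a' ltac:(lra) ltac:(lra) (ex_RInt_right a a' ltac:(lra) ltac:(lra))).
    assert (h2 := RInt_dominated_abs b' b ltac:(lra) ltac:(lra) (ex_RInt_right b' b ltac:(lra) ltac:(lra))).
    fold K in h1, h2.
    assert (k1 : Rabs (E a - E a') <= mu * d).
    { destruct (dominant_near_lo a d Ha), (dominant_near_lo a' d Ha'). apply Rabs_le. lra. }
    assert (k2 : Rabs (E b' - E b) <= / (mu * (B - lo))).
    { destruct (dominant_far b B ltac:(lra)), (dominant_far b' B ltac:(lra)). apply Rabs_le. lra. }
    assert (e1 : K * (mu * d) < eps / 2).
    { unfold d. replace (K * (mu * (eps / (2 * mu * (K + 1))))) with (eps / 2 * (K / (K + 1)))
        by (field; lra).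
      assert (K / (K + 1) < 1) by (apply Rlt_div_l; lra). nra. }
    assert (e2 : K * / (mu * (B - lo)) < eps / 2).
    { unfold B. replace (K * / (mu * (lo + 2 * (K + 1) / (mu * eps) - lo))) with (eps / 2 * (K / (K + 1)))
        by (field; lra).
      assert (K / (K + 1) < 1) by (apply Rlt_div_l; lra). nra. }
    eapply Rle_lt_trans; [apply Rabs_triang|].
    assert (K * Rabs (E a - E a') <= K * (mu * d)) by (apply Rmult_le_compat_l; auto).
    assert (K * Rabs (E b' - E b) <= K * / (mu * (B - lo))) by (apply Rmult_le_compat_l; auto).
    lra.
  - exists v. intros eps Heps. destruct (Hv eps Heps) as [d [B [Hd HB]]].
    exists (Rmin d 1), (Rmax B (lo + 1)). split; [apply Rmin_glb_lt; lra|].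
    intros a b Ha Hb.
    generalize (Rmin_l d 1) (Rmin_r d 1) (Rmax_l B (lo + 1)) (Rmax_r B (lo + 1)); intros.
    exists (ex_RInt_Reals_0 _ _ _ (ex_RInt_right a b ltac:(lra) ltac:(lra))).
    rewrite <- RInt_Reals. apply HB; lra.
Qed.

End ExponentiallyDominated.

Lemma improper_integral_linear f g lo v w k :
  improper_integral_R f lo v -> improper_integral_R g lo w ->
  improper_integral_R (fun r => f r + k * g r) lo (v + k * w).
Proof.
  intros Hf Hg eps Heps.
  assert (Hk := Rabs_pos k).
  destruct (Hf (eps / 2)) as [d1 [B1 [Hd1 H1]]]; [lra|].
  destruct (Hg (eps / (2 * (Rabs k + 1)))) as [d2 [B2 [Hd2 H2]]];
    [apply Rdiv_lt_0_compat; lra|].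
  exists (Rmin d1 d2), (Rmax B1 B2). split; [apply Rmin_glb_lt; auto|].
  intros a b Ha Hb.
  generalize (Rmin_l d1 d2) (Rmin_r d1 d2) (Rmax_l B1 B2) (Rmax_r B1 B2); intros.
  destruct (H1 a b ltac:(lra) ltac:(lra)) as [p1 h1].
  destruct (H2 a b ltac:(lra) ltac:(lra)) as [p2 h2].
  rewrite <- RInt_Reals in h1, h2.
  assert (e1 := ex_RInt_Reals_1 _ _ _ p1). assert (e2 := ex_RInt_Reals_1 _ _ _ p2).
  assert (e2' := ex_RInt_scal (V := R_NormedModule) g a b k e2).
  assert (e3 := ex_RInt_plus (V := R_NormedModule) _ _ a b e1 e2').
  exists (ex_RInt_Reals_0 _ _ _ e3). rewrite <- RInt_Reals.
  replace (RInt (fun r => f r + k * g r) a b) with (RInt f a b + k * RInt g a b).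
  2: { change (RInt f a b + k * RInt g a b = RInt (fun r => plus (f r) (scal k (g r))) a b).
       rewrite (RInt_plus (V := R_CompleteNormedModule) f (fun r => scal k (g r))) by auto.
       rewrite (RInt_scal (V := R_CompleteNormedModule) g) by auto. reflexivity. }
  replace (RInt f a b + k * RInt g a b - (v + k * w))
    with ((RInt f a b - v) + k * (RInt g a b - w)) by ring.
  eapply Rle_lt_trans; [apply Rabs_triang|]. rewrite Rabs_mult.
  assert (Rabs k * Rabs (RInt g a b - w) <= Rabs k * (eps / (2 * (Rabs k + 1))))
    by (apply Rmult_le_compat_l; lra).
  assert (Rabs k * (eps / (2 * (Rabs k + 1))) < eps / 2).
  { replace (Rabs k * (eps / (2 * (Rabs k + 1)))) with (eps / 2 * (Rabs k / (Rabs k + 1)))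
      by (field; lra).
    assert (Rabs k / (Rabs k + 1) < 1) by (apply Rlt_div_l; lra). nra. }
  lra.
Qed.

Lemma mean_value_bound (phi phi' : R -> R) x y K :
  (forall s, Rmin x y <= s <= Rmax x y -> derivable_pt_lim phi s (phi' s)) ->
  (forall s, Rmin x y <= s <= Rmax x y -> Rabs (phi' s) <= K) ->
  Rabs (phi y - phi x) <= K * Rabs (y - x).
Proof.
  intros Hd Hb. destruct (Rtotal_order x y) as [H|[H|H]].
  - rewrite Rmin_left, Rmax_right in * by lra.
    destruct (MVT_cor2 phi phi' x y H Hd) as [c [Hc1 Hc2]].
    rewrite Hc1, Rabs_mult. apply Rmult_le_compat_r; [apply Rabs_pos | apply Hb; lra].
  - subst. replace (phi y - phi y) with 0 by ring. replace (y - y) with 0 by ring.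
    rewrite Rabs_R0, Rmult_0_r. lra.
  - rewrite Rmin_right, Rmax_left in * by lra.
    destruct (MVT_cor2 phi phi' y x H Hd) as [c [Hc1 Hc2]].
    rewrite <- Rabs_Ropp, <- (Rabs_Ropp (y - x)).
    replace (- (phi y - phi x)) with (phi x - phi y) by ring.
    replace (- (y - x)) with (x - y) by ring.
    rewrite Hc1, Rabs_mult. apply Rmult_le_compat_r; [apply Rabs_pos | apply Hb; lra].
Qed.

Lemma taylor_remainder_bound (phi phi1 phi2 : R -> R) x0 y K :
  (forall s, Rmin x0 y <= s <= Rmax x0 y -> derivable_pt_lim phi s (phi1 s)) ->
  (forall s, Rmin x0 y <= s <= Rmax x0 y -> derivable_pt_lim phi1 s (phi2 s)) ->
  (forall s, Rmin x0 y <= s <= Rmax x0 y -> Rabs (phi2 s) <= K) ->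
  Rabs (phi y - phi x0 - (y - x0) * phi1 x0) <= K * (y - x0) ^ 2.
Proof.
  intros D1 D2 B2.
  assert (Hsub : forall s z, Rmin x0 y <= s <= Rmax x0 y -> Rmin x0 s <= z <= Rmax x0 s ->
            Rmin x0 y <= z <= Rmax x0 y)
    by (intros s z; unfold Rmin, Rmax; repeat destruct Rle_dec; lra).
  assert (Hdist : forall s, Rmin x0 y <= s <= Rmax x0 y -> Rabs (s - x0) <= Rabs (y - x0))
    by (intros s Hs; unfold Rmin, Rmax in Hs; destruct Rle_dec;
        [rewrite (Rabs_pos_eq (s - x0)), (Rabs_pos_eq (y - x0)) by lra
        | rewrite (Rabs_left1 (s - x0)), (Rabs_left1 (y - x0)) by lra]; lra).
  assert (HK : 0 <= K) by (generalize (B2 x0) (Rabs_pos (phi2 x0));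
                           unfold Rmin, Rmax; destruct Rle_dec; intros h; specialize (h ltac:(lra)); lra).
  replace (phi y - phi x0 - (y - x0) * phi1 x0)
    with ((phi y - (y - x0) * phi1 x0) - (phi x0 - (x0 - x0) * phi1 x0)) by ring.
  replace (K * (y - x0) ^ 2) with ((K * Rabs (y - x0)) * Rabs (y - x0))
    by (rewrite <- Rsqr_pow2, (Rsqr_abs (y - x0)); unfold Rsqr; ring).
  apply (mean_value_bound (fun s => phi s - (s - x0) * phi1 x0) (fun s => phi1 s - phi1 x0)).
  - intros s Hs. apply (derivable_pt_lim_minus phi (fun s => (s - x0) * phi1 x0)); [now apply D1|].
    apply is_derive_Reals. auto_derive; auto. ring.
  - intros s Hs. eapply Rle_trans.
    + apply (mean_value_bound phi1 phi2 x0 s K);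
        intros z Hz; [apply D2 | apply B2]; eapply Hsub; eauto.
    + apply Rmult_le_compat_l; auto.
Qed.

Lemma derivable_of_quadratic_error (I : R -> R) x0 J Q d :
  0 <= Q -> 0 < d ->
  (forall y, Rabs (y - x0) < d -> Rabs (I y - I x0 - (y - x0) * J) <= Q * (y - x0) ^ 2) ->
  derivable_pt_lim I x0 J.
Proof.
  intros HQ Hd Herr eps Heps.
  assert (Hdel : 0 < Rmin d (eps / (Q + 1)))
    by (apply Rmin_glb_lt; [lra | apply Rdiv_lt_0_compat; lra]).
  exists (mkposreal _ Hdel). intros h Hh Hhd. simpl in Hhd.
  generalize (Rmin_l d (eps / (Q + 1))) (Rmin_r d (eps / (Q + 1))); intros.
  assert (K := Herr (x0 + h) ltac:(replace (x0 + h - x0) with h by ring; lra)).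
  replace (x0 + h - x0) with h in K by ring.
  replace ((I (x0 + h) - I x0) / h - J) with ((I (x0 + h) - I x0 - h * J) / h) by (field; auto).
  assert (Hh0 : 0 < Rabs h) by now apply Rabs_pos_lt.
  unfold Rdiv. rewrite Rabs_mult, Rabs_inv.
  apply (Rmult_lt_reg_r (Rabs h)); auto. rewrite Rmult_assoc, Rinv_l, Rmult_1_r by lra.
  eapply Rle_lt_trans; [apply K|].
  rewrite <- Rsqr_pow2, Rsqr_abs. unfold Rsqr.
  assert (Q * Rabs h < eps).
  { apply Rle_lt_trans with (eps * (Q / (Q + 1))).
    - replace (eps * (Q / (Q + 1))) with (Q * (eps / (Q + 1))) by (field; lra).
      apply Rmult_le_compat_l; lra.
    - assert (Q / (Q + 1) < 1) by (apply Rlt_div_l; lra). nra. }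
  nra.
Qed.

Lemma improper_integral_derivable (lo xlo C mu : R) (f f1 f2 : R -> R -> R) (I : R -> R) (J x0 : R) :
  0 < mu -> xlo < x0 ->
  (forall t r, xlo < t -> lo < r -> derivable_pt_lim (fun s => f s r) t (f1 t r)) ->
  (forall t r, xlo < t -> lo < r -> derivable_pt_lim (fun s => f1 s r) t (f2 t r)) ->
  (forall t r, xlo < t -> lo < r -> Rabs (f2 t r) <= C * exp (- mu * (r - lo))) ->
  (forall t, xlo < t -> improper_integral_R (f t) lo (I t)) ->
  improper_integral_R (f1 x0) lo J ->
  derivable_pt_lim I x0 J.
Proof.
  intros Hmu Hx0 D1 D2 B2 HI HJ.
  assert (HC : 0 <= C).
  { apply (dominating_constant_nonneg (f2 x0) lo C mu). intros r Hr. now apply B2. }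
  apply (derivable_of_quadratic_error I x0 J (C / mu) (x0 - xlo));
    [apply Rdiv_le_0_compat; lra | lra|].
  intros y Hy.
  assert (Hyx : xlo < y) by (generalize (Rle_abs (x0 - y)); rewrite Rabs_minus_sym in Hy; lra).
  assert (Hseg : forall s, Rmin x0 y <= s <= Rmax x0 y -> xlo < s)
    by (intros s Hs; assert (xlo < Rmin x0 y) by (apply Rmin_glb_lt; auto); lra).
  (* the integrand of the error term is the Taylor remainder of [f . r] *)
  assert (Hrem := improper_integral_linear _ _ lo _ _ (- (y - x0))
    (improper_integral_linear _ _ lo _ _ (-1) (HI y Hyx) (HI x0 Hx0)) HJ).
  replace (I y - I x0 - (y - x0) * J) with (I y + -1 * I x0 + - (y - x0) * J) by ring.
  replace (C / mu * (y - x0) ^ 2) with ((y - x0) ^ 2 * C / mu) by (field; lra).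
  apply (improper_value_bound (fun r => f y r + -1 * f x0 r + - (y - x0) * f1 x0 r) lo
           ((y - x0) ^ 2 * C) mu Hmu); [|exact Hrem].
  intros r Hr.
  replace (f y r + -1 * f x0 r + - (y - x0) * f1 x0 r)
    with (f y r - f x0 r - (y - x0) * f1 x0 r) by ring.
  eapply Rle_trans.
  - apply (taylor_remainder_bound (fun s => f s r) (fun s => f1 s r) (fun s => f2 s r) x0 y
             (C * exp (- mu * (r - lo))));
      intros s Hs; [apply D1 | apply D2 | apply B2]; auto.
  - right; ring.
Qed.

Lemma kerr_horizons M a : 0 < M -> Rabs a < M ->
  0 < rplus M a /\ 0 <= rminus M a /\ rminus M a < rplus M a /\
  (forall r, Delta M a r = (r - rplus M a) * (r - rminus M a)).
Proof.
  intros HM Ha.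
  assert (Ha2 : a ^ 2 < M ^ 2) by (rewrite <- (pow2_abs a); generalize (Rabs_pos a); nra).
  set (S := sqrt (M ^ 2 - a ^ 2)).
  assert (HS : 0 < S) by (apply sqrt_lt_R0; lra).
  assert (HS2 : S * S = M ^ 2 - a ^ 2) by (apply sqrt_sqrt; lra).
  assert (HSM : S <= M) by (destruct (Rle_or_lt S M); [auto | nra]).
  unfold rplus, rminus, Delta. fold S. repeat split; try lra. intros r. nra.
Qed.

Lemma tortoise_continuous M a rstar : tortoise M a rstar ->
  forall r, rplus M a < r -> continuity_pt rstar r.
Proof.
  intros [Hd _] r Hr. apply derivable_continuous_pt.
  exists ((r ^ 2 + a ^ 2) / Delta M a r). now apply Hd.
Qed.

(** A function with a [d/dr^*]-derivative is continuous, [r^*] being continuous and injective. *)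
Lemma continuity_of_dstar rstar lo f g :
  (forall r, lo < r -> continuity_pt rstar r) ->
  (forall r1 r2, lo < r1 -> r1 < r2 -> rstar r1 < rstar r2) ->
  dstar rstar lo f g -> forall r, lo < r -> Ccont f r.
Proof.
  intros Hc Hm Hd r Hr.
  assert (Key : forall eps, 0 < eps -> exists alp, 0 < alp /\ forall y, y <> r ->
            Rabs (y - r) < alp -> Cnorm (Csub (f y) (f r)) < eps).
  { intros eps Heps. destruct (Hd r Hr 1 ltac:(lra)) as [d [Hd0 Hdd]].
    set (c := Cnorm (g r) + 1).
    assert (Hc0 : 0 < c) by (unfold c; generalize (Cnorm_ge0 (g r)); lra).
    destruct (Hc r Hr (eps / c)) as [alp [Halp Hcont]]; [now apply Rdiv_lt_0_compat|].
    exists (Rmin d (Rmin alp (r - lo))).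
    split; [apply Rmin_glb_lt; [|apply Rmin_glb_lt]; lra|].
    intros y Hy Hyr.
    generalize (Rmin_l d (Rmin alp (r - lo))) (Rmin_r d (Rmin alp (r - lo)))
               (Rmin_l alp (r - lo)) (Rmin_r alp (r - lo)); intros.
    assert (Hy0 : lo < y) by (generalize (Rle_abs (r - y)); rewrite Rabs_minus_sym in Hyr; lra).
    assert (HD : 0 < Rabs (rstar y - rstar r)).
    { apply Rabs_pos_lt. destruct (Rtotal_order y r) as [h|[h|h]].
      - generalize (Hm y r Hy0 h); lra.
      - contradiction.
      - generalize (Hm r y Hr h); lra. }
    (* the difference quotient is bounded by [c], and [r^*] moves by less than [eps / c] *)
    assert (h1 : Cnorm (Cscal (/ (rstar y - rstar r)) (Csub (f y) (f r))) < c)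
      by (generalize (Hdd y Hy0 Hy ltac:(lra)) (Cnorm_sub_le (Cscal (/ (rstar y - rstar r))
            (Csub (f y) (f r))) (g r)); unfold c; lra).
    assert (h2 : Rabs (rstar y - rstar r) < eps / c)
      by (apply (Hcont y); split; [split; [exact I | intro; subst; auto] | simpl; unfold R_dist; lra]).
    rewrite Cnorm_scal, Rabs_inv in h1.
    apply Rlt_le_trans with (c * Rabs (rstar y - rstar r)).
    - apply (Rmult_lt_reg_l (/ Rabs (rstar y - rstar r))); [now apply Rinv_0_lt_compat|].
      rewrite <- Rmult_assoc, (Rmult_comm _ c), Rmult_assoc, Rinv_l, Rmult_1_r by lra. lra.
    - replace eps with (c * (eps / c)) by (field; lra). apply Rmult_le_compat_l; lra. }
  split; intros eps Heps; destruct (Key eps Heps) as [alp [Ha Hy]];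
    exists alp; split; auto; intros y [[_ Hyr] Hd']; simpl in Hd'; unfold R_dist in *.
  - simpl; unfold R_dist. eapply Rle_lt_trans; [|apply (Hy y); [congruence | exact Hd']].
    replace (fst (f y) - fst (f r)) with (fst (Csub (f y) (f r))) by (simpl; ring).
    apply Cnorm_fst.
  - simpl; unfold R_dist. eapply Rle_lt_trans; [|apply (Hy y); [congruence | exact Hd']].
    replace (snd (f y) - snd (f r)) with (snd (Csub (f y) (f r))) by (simpl; ring).
    apply Cnorm_snd.
Qed.

Lemma ratio_of_differences g s x l ls : derivable_pt_lim g x l -> derivable_pt_lim s x ls -> ls <> 0 ->
  forall eps, 0 < eps -> exists d, 0 < d /\ forall y, y <> x -> Rabs (y - x) < d -> s y <> s x ->
    Rabs ((g y - g x) / (s y - s x) - l / ls) < eps.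
Proof.
  intros Hg Hs Hls eps Heps.
  assert (Hq : forall h l0, derivable_pt_lim h x l0 -> is_lim (fun y => (h y - h x) / (y - x)) x l0).
  { intros h l0 H. apply is_lim_spec. intros e. destruct (H e (cond_pos e)) as [d Hd].
    exists d. intros y Hy Hyx. change R in y. specialize (Hd (y - x)).
    replace (x + (y - x)) with y in Hd by ring. apply Hd; [intro; apply Hyx; lra | exact Hy]. }
  assert (H := is_lim_div _ _ x l ls (Hq g l Hg) (Hq s ls Hs)).
  assert (H' : is_lim (fun y => (g y - g x) / (y - x) / ((s y - s x) / (y - x))) x (l / ls)).
  { replace (Finite (l / ls)) with (Rbar_div l ls) by reflexivity.
    apply H; [intro h; apply Hls; now injection h | exact I]. }
  apply is_lim_spec in H'. destruct (H' (mkposreal eps Heps)) as [d Hd].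
  exists d. split; [apply cond_pos|]. intros y Hy Hyd Hsy.
  replace ((g y - g x) / (s y - s x)) with ((g y - g x) / (y - x) / ((s y - s x) / (y - x)))
    by (field; split; intro; [apply Hy | apply Hsy]; lra).
  now apply (Hd y).
Qed.

Lemma dstar_of_deriv M a rstar (f f' : R -> Cx) : 0 < M -> Rabs a < M -> tortoise M a rstar ->
  (forall x, rplus M a < x -> Cderiv_at f x (f' x)) ->
  dstar rstar (rplus M a) f (fun x => Cscal (Delta M a x / (x ^ 2 + a ^ 2)) (f' x)).
Proof.
  intros HM Ha [Hd [Hm _]] Hf x Hx eps Heps.
  destruct (kerr_horizons M a HM Ha) as [Hrp [_ [Hrm HD]]].
  assert (HDx : 0 < Delta M a x) by (rewrite HD; apply Rmult_lt_0_compat; lra).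
  assert (Hxa : 0 < x ^ 2 + a ^ 2) by nra.
  assert (Hls : (x ^ 2 + a ^ 2) / Delta M a x <> 0)
    by (apply Rgt_not_eq, Rdiv_lt_0_compat; auto).
  destruct (Hf x Hx) as [F1 F2].
  destruct (ratio_of_differences _ _ x _ _ F1 (Hd x Hx) Hls (eps / 2) ltac:(lra)) as [d1 [Hd1 H1]].
  destruct (ratio_of_differences _ _ x _ _ F2 (Hd x Hx) Hls (eps / 2) ltac:(lra)) as [d2 [Hd2 H2]].
  exists (Rmin d1 d2). split; [apply Rmin_glb_lt; auto|].
  intros y Hy Hyx Hyd. generalize (Rmin_l d1 d2) (Rmin_r d1 d2); intros.
  assert (Hs : rstar y <> rstar x).
  { destruct (Rtotal_order y x) as [h|[h|h]].
    - generalize (Hm y x Hy h); lra.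
    - contradiction.
    - generalize (Hm x y Hx h); lra. }
  eapply Rle_lt_trans; [apply Cnorm_le_sum|]. unfold Csub, Cadd, Copp, Cscal; cbn [fst snd].
  replace (/ (rstar y - rstar x) * (fst (f y) + - fst (f x)) + - (Delta M a x / (x ^ 2 + a ^ 2) * fst (f' x)))
    with ((fst (f y) - fst (f x)) / (rstar y - rstar x) - fst (f' x) / ((x ^ 2 + a ^ 2) / Delta M a x))
    by (field; repeat split; lra).
  replace (/ (rstar y - rstar x) * (snd (f y) + - snd (f x)) + - (Delta M a x / (x ^ 2 + a ^ 2) * snd (f' x)))
    with ((snd (f y) - snd (f x)) / (rstar y - rstar x) - snd (f' x) / ((x ^ 2 + a ^ 2) / Delta M a x))
    by (field; repeat split; lra).
  generalize (H1 y Hyx ltac:(lra) Hs) (H2 y Hyx ltac:(lra) Hs). lra.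
Qed.

Lemma bound_on_half_line (h : R -> R) lo k d R0 Ch Cf :
  0 <= k -> 0 < d -> lo + d <= R0 ->
  (forall r, lo < r -> continuity_pt h r) ->
  (forall r, lo < r < lo + d -> h r <= Ch) ->
  (forall r, R0 <= r -> h r <= Cf * exp (k * (r - lo))) ->
  exists C, 0 <= C /\ forall r, lo < r -> h r <= C * exp (k * (r - lo)).
Proof.
  intros Hk Hd HR0 Hc Hnear Hfar.
  destruct (continuity_ab_maj h (lo + d) R0 HR0) as [Mx [HMx HMx']];
    [intros c Hc'; apply Hc; lra|].
  exists (Rabs Ch + Rabs (h Mx) + Rabs Cf).
  generalize (Rabs_pos Ch) (Rabs_pos (h Mx)) (Rabs_pos Cf); intros.
  split; [lra|]. intros r Hr.
  assert (He : 1 <= exp (k * (r - lo))) by (rewrite <- exp_0; apply exp_mono; nra).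
  destruct (Rlt_or_le r (lo + d)); [|destruct (Rle_or_lt r R0)].
  - generalize (Hnear r ltac:(lra)) (Rle_abs Ch). nra.
  - generalize (HMx r ltac:(lra)) (Rle_abs (h Mx)). nra.
  - assert (h r <= Rabs Cf * exp (k * (r - lo))).
    { eapply Rle_trans; [apply Hfar; lra|].
      apply Rmult_le_compat_r; [left; apply exp_pos | apply Rle_abs]. }
    nra.
Qed.

(** The amplitude [G] of Whiting's integrand, i.e. the integrand without
    its [x]-dependent exponential. *)
Definition amplitude (M a : R) (om : Cx) (m : Z) (u : R -> Cx) (r : R) : Cx :=
  Cmul (Cpow_pos (r - rminus M a) (eta M a om m))
  (Cmul (Cpow_pos (r - rplus M a) (xi M a om m))
  (Cmul (Cexp (Cmul (Copp Ci) (Cscal r om)))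
        (Cscal (/ sqrt (r ^ 2 + a ^ 2)) (u r)))).

Section Amplitude.
Variables (M a : R) (om : Cx) (m : Z) (u : R -> Cx).
Hypothesis HM : 0 < M.
Hypothesis Ha : Rabs a < M.
Hypothesis Hw : 0 < snd om.

Local Notation rp := (rplus M a).
Local Notation rm := (rminus M a).
Local Notation w := (snd om).

Lemma re_xi_nonneg : 0 <= fst (xi M a om m).
Proof.
  destruct (kerr_horizons M a HM Ha) as [Hrp [Hrm [Hlt _]]].
  replace (fst (xi M a om m)) with (2 * M * rp * w / (rp - rm))
    by (unfold xi, Cscal, Cmul, Csub, Cadd, Copp, Ci, RtoC; simpl; field; lra).
  apply Rdiv_le_0_compat; [|lra]. apply Rmult_le_pos; [apply Rmult_le_pos|]; lra.
Qed.

Lemma re_eta_nonpos : fst (eta M a om m) <= 0.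
Proof.
  destruct (kerr_horizons M a HM Ha) as [Hrp [Hrm [Hlt _]]].
  replace (fst (eta M a om m)) with (- (2 * M * rm * w / (rp - rm)))
    by (unfold eta, Cscal, Cmul, Csub, Cadd, Copp, Ci, RtoC; simpl; field; lra).
  assert (0 <= 2 * M * rm * w / (rp - rm)); [|lra].
  apply Rdiv_le_0_compat; [|lra]. apply Rmult_le_pos; [apply Rmult_le_pos|]; lra.
Qed.

Lemma amplitude_norm r : rp < r ->
  Cnorm (amplitude M a om m u r) =
    exp (fst (eta M a om m) * ln (r - rm)) * exp (fst (xi M a om m) * ln (r - rp)) *
    (exp (w * r) * (Cnorm (u r) / sqrt (r ^ 2 + a ^ 2))).
Proof.
  intros Hr. destruct (kerr_horizons M a HM Ha) as [Hrp _].
  unfold amplitude. rewrite !Cnorm_mul, !Cnorm_pow, Cnorm_exp, Cnorm_scal.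
  rewrite Rabs_pos_eq by (left; apply Rinv_0_lt_compat; generalize (sqrt_ge_r r a ltac:(lra)); lra).
  replace (fst (Cmul (Copp Ci) (Cscal r om))) with (w * r) by (simpl; ring).
  unfold Rdiv. ring.
Qed.

Lemma amplitude_continuous : (forall r, rp < r -> Ccont u r) ->
  forall r, rp < r -> Ccont (amplitude M a om m u) r.
Proof.
  intros Hu r Hr. destruct (kerr_horizons M a HM Ha) as [Hrp [Hrm [Hlt _]]].
  unfold amplitude.
  repeat apply Ccont_mul; try (apply Ccont_pow; lra).
  - apply Ccont_exp, Ccont_mul; [apply Ccont_const|].
    apply Ccont_scal; [apply continuity_pt_id | apply Ccont_const].
  - apply Ccont_scal; [|now apply Hu].
    apply continuity_pt_of_ex_derive. auto_derive.
    assert (0 < sqrt (r ^ 2 + a ^ 2)) by (apply sqrt_lt_R0; nra).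
    replace (r * (r * 1) + a * (a * 1)) with (r ^ 2 + a ^ 2) by ring.
    repeat split; nra.
Qed.

(** Near the horizon [u] is [(r - r_+)^xi] times a function continuous up to [r_+];
    as [Re xi >= 0], [u] is bounded there. *)
Lemma mode_near_horizon : bc_horizon M a om m u ->
  exists d B, 0 < d /\ forall r, rp < r < rp + d -> Cnorm (u r) <= B.
Proof.
  intros [d [Hd [D [HD0 [_ HDc]]]]].
  destruct (HDc O 1 ltac:(lra)) as [d1 [Hd1 Hc1]].
  assert (Hxi := re_xi_nonneg).
  exists (Rmin (Rmin d d1) 1), (Cnorm (D O rp) + 1).
  split; [repeat apply Rmin_glb_lt; lra|]. intros r Hr.
  generalize (Rmin_l (Rmin d d1) 1) (Rmin_r (Rmin d d1) 1) (Rmin_l d d1) (Rmin_r d d1); intros.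
  assert (HDr : Cnorm (D O r) <= Cnorm (D O rp) + 1)
    by (generalize (Hc1 r ltac:(lra) ltac:(lra)) (Cnorm_sub_le (D O r) (D O rp)); lra).
  rewrite (HD0 r ltac:(lra)), Cnorm_mul, Cnorm_pow in HDr.
  change (fst (Copp (xi M a om m))) with (- fst (xi M a om m)) in HDr.
  assert (Hl : ln (r - rp) <= 0) by (rewrite <- ln_1; apply ln_le; lra).
  assert (1 <= exp (- fst (xi M a om m) * ln (r - rp)))
    by (rewrite <- exp_0; apply exp_mono; nra).
  generalize (Cnorm_ge0 (u r)). nra.
Qed.

(** Near infinity, [u] is bounded since [|e^{i om r^*}| = e^{-Im om r^*}] decreases. *)
Lemma mode_bounded_far rstar : tortoise M a rstar -> bc_infinity M a rstar om u ->
  exists R0 B, rp < R0 /\ forall r, R0 <= r -> Cnorm (u r) <= B.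
Proof.
  intros [_ [Hmono _]] [Cs HCs]. destruct (HCs O) as [K [X HKX]].
  destruct (kerr_horizons M a HM Ha) as [Hrp _].
  set (R0 := Rmax X rp + 1).
  assert (HR0 : rp + 1 <= R0 /\ X < R0) by (unfold R0; generalize (Rmax_l X rp) (Rmax_r X rp); lra).
  exists R0, (exp (- w * rstar R0) * Cnorm (Cs O) + Rabs K). split; [lra|].
  intros r Hr. assert (h := HKX r ltac:(lra) ltac:(lra)).
  simpl Csum in h.
  replace (Cscal (/ 1) (Cs O)) with (Cs O) in h by (apply Cpair_eq; simpl; field).
  rewrite pow_1 in h.
  eapply Rle_trans; [apply (Cnorm_sub_le _ (Cmul (Cexp (Cmul Ci (Cscal (rstar r) om))) (Cs O)))|].
  rewrite Cnorm_mul, Cnorm_exp.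
  replace (fst (Cmul Ci (Cscal (rstar r) om))) with (- w * rstar r) by (simpl; ring).
  assert (Hst : rstar R0 <= rstar r)
    by (destruct (Req_dec R0 r); [subst; lra | left; apply Hmono; lra]).
  assert (exp (- w * rstar r) <= exp (- w * rstar R0)) by (apply exp_mono; nra).
  assert (K * / r <= Rabs K).
  { assert (0 < / r <= 1) by (split; [apply Rinv_0_lt_compat | rewrite <- Rinv_1;
                                       apply Rinv_le_contravar]; lra).
    generalize (Rle_abs K) (Rabs_pos K). destruct (Rle_or_lt 0 K); nra. }
  generalize (Cnorm_ge0 (Cs O)). nra.
Qed.

(** The factor [(r - r_-)^eta] is bounded since [Re eta <= 0]. *)
Lemma eta_factor_bound r : rp < r ->
  0 <= exp (fst (eta M a om m) * ln (r - rm)) <= exp (fst (eta M a om m) * ln (rp - rm)).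
Proof.
  intros Hr. destruct (kerr_horizons M a HM Ha) as [_ [_ [Hlt _]]].
  split; [left; apply exp_pos|]. apply exp_mono.
  apply Rmult_le_compat_neg_l; [apply re_eta_nonpos | apply ln_le; lra].
Qed.

Lemma mode_over_radius r B : rp < r -> Cnorm (u r) <= B ->
  0 <= Cnorm (u r) / sqrt (r ^ 2 + a ^ 2) <= B / rp.
Proof.
  intros Hr HB. destruct (kerr_horizons M a HM Ha) as [Hrp _].
  assert (Hs := sqrt_ge_r r a ltac:(lra)).
  split; [apply Rdiv_le_0_compat; [apply Cnorm_ge0 | lra]|].
  unfold Rdiv. apply mult_le_compat_nonneg.
  - split; [apply Cnorm_ge0 | exact HB].
  - split; [left; apply Rinv_0_lt_compat; lra | apply Rinv_le_contravar; lra].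
Qed.

Lemma amplitude_near_horizon : bc_horizon M a om m u ->
  exists d C, 0 < d /\ forall r, rp < r < rp + d -> Cnorm (amplitude M a om m u r) <= C.
Proof.
  intros Hh. destruct (mode_near_horizon Hh) as [d [B [Hd HB]]].
  exists (Rmin d 1), (exp (fst (eta M a om m) * ln (rp - rm)) * 1 * (exp (w * (rp + 1)) * (B / rp))).
  split; [apply Rmin_glb_lt; lra|]. intros r Hr.
  generalize (Rmin_l d 1) (Rmin_r d 1); intros.
  assert (F1 := eta_factor_bound r ltac:(lra)).
  assert (F2 : 0 <= exp (fst (xi M a om m) * ln (r - rp)) <= 1).
  { split; [left; apply exp_pos|]. rewrite <- exp_0. apply exp_mono.
    assert (ln (r - rp) <= 0) by (rewrite <- ln_1; apply ln_le; lra).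
    generalize re_xi_nonneg. nra. }
  assert (F3 : 0 <= exp (w * r) <= exp (w * (rp + 1)))
    by (split; [left; apply exp_pos | apply exp_mono; nra]).
  assert (F4 := mode_over_radius r B ltac:(lra) (HB r ltac:(lra))).
  rewrite amplitude_norm by lra.
  apply mult_le_compat_nonneg; split; try (apply Rmult_le_pos; lra);
    apply mult_le_compat_nonneg; lra.
Qed.

(** Near infinity [|(r - r_+)^xi| <= C e^{w (r - r_+)/4}], whence the growth of [G]. *)
Lemma amplitude_far rstar : tortoise M a rstar -> bc_infinity M a rstar om u ->
  exists R0 C, rp < R0 /\ forall r, R0 <= r ->
    Cnorm (amplitude M a om m u r) <= C * exp (5 / 4 * w * (r - rp)).
Proof.
  intros Ht Hi. destruct (mode_bounded_far rstar Ht Hi) as [R0 [B [HR0 HB]]].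
  set (x1 := fst (xi M a om m)).
  set (Cxi := exp (x1 * ln ((x1 + 1) / (w / 4)))).
  exists R0, (exp (fst (eta M a om m) * ln (rp - rm)) * Cxi * (exp (w * rp) * (B / rp))).
  split; [exact HR0|]. intros r Hr.
  assert (F1 := eta_factor_bound r ltac:(lra)).
  assert (F2 : 0 <= exp (x1 * ln (r - rp)) <= Cxi * exp (w / 4 * (r - rp))).
  { split; [left; apply exp_pos|]. apply power_below_exponential; [apply re_xi_nonneg | lra..]. }
  assert (F4 := mode_over_radius r B ltac:(lra) (HB r Hr)).
  assert (0 <= exp (w * r)) by (left; apply exp_pos).
  rewrite amplitude_norm by lra. fold x1.
  replace (exp (fst (eta M a om m) * ln (rp - rm)) * Cxi * (exp (w * rp) * (B / rp)) * exp (5 / 4 * w * (r - rp)))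
    with (exp (fst (eta M a om m) * ln (rp - rm)) * (Cxi * exp (w / 4 * (r - rp))) * (exp (w * r) * (B / rp)))
    by (replace (w * r) with (w * rp + w * (r - rp)) by ring;
        replace (5 / 4 * w * (r - rp)) with (w / 4 * (r - rp) + w * (r - rp)) by field;
        rewrite !exp_plus; ring).
  apply mult_le_compat_nonneg; split; try (apply Rmult_le_pos; lra);
    apply mult_le_compat_nonneg; lra.
Qed.

Lemma amplitude_bound rstar : tortoise M a rstar ->
  (forall r, rp < r -> Ccont u r) -> bc_horizon M a om m u -> bc_infinity M a rstar om u ->
  exists C, 0 <= C /\ forall r, rp < r ->
    Cnorm (amplitude M a om m u r) <= C * exp (5 / 4 * w * (r - rp)).
Proof.
  intros Ht Hu Hh Hi.
  destruct (amplitude_near_horizon Hh) as [d [Ch [Hd Hnear]]].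
  destruct (amplitude_far rstar Ht Hi) as [R0 [Cf [HR0 Hfar]]].
  apply (bound_on_half_line _ rp _ (Rmin d (R0 - rp)) R0 Ch Cf).
  - lra.
  - apply Rmin_glb_lt; lra.
  - generalize (Rmin_r d (R0 - rp)); lra.
  - intros r Hr. now apply Ccont_norm, amplitude_continuous.
  - intros r Hr. apply Hnear. generalize (Rmin_l d (R0 - rp)); lra.
  - exact Hfar.
Qed.

End Amplitude.

(** Whiting's integrand is [e^{i om k(x, r)} K(r)] with the phase [k] below and
    [K] the amplitude; its [x]-derivative is of the same form, with [K] replaced
    by [i om (dk/dx) K]. *)
Definition phase (M a x r : R) : R := 2 * (x - rminus M a) * (r - rminus M a) / (rplus M a - rminus M a).
Definition phase_rate (M a r : R) : R := 2 * (r - rminus M a) / (rplus M a - rminus M a).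
Definition oscillatory (M a : R) (om : Cx) (K : R -> Cx) (x r : R) : Cx :=
  Cmul (Cexp (Cscal (phase M a x r) (Cmul Ci om))) (K r).
Definition dx_amplitude (M a : R) (om : Cx) (K : R -> Cx) (r : R) : Cx :=
  Cscal (phase_rate M a r) (Cmul (Cmul Ci om) (K r)).

Definition oscillatory_integral (M a : R) (om : Cx) (K : R -> Cx) (x : R) : Cx :=
  CimpInt (oscillatory M a om K x) (rplus M a).

Lemma oscillatory_norm M a om K x r :
  Cnorm (oscillatory M a om K x r) = exp (- snd om * phase M a x r) * Cnorm (K r).
Proof. unfold oscillatory. rewrite Cnorm_mul, Cnorm_exp. f_equal. f_equal. simpl. ring. Qed.

Lemma dx_amplitude_norm M a om K r :
  Cnorm (dx_amplitude M a om K r) = Rabs (phase_rate M a r) * (Cnorm om * Cnorm (K r)).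
Proof.
  unfold dx_amplitude. rewrite Cnorm_scal, !Cnorm_mul.
  replace (Cnorm Ci) with 1 by (unfold Cnorm, Ci; cbn [fst snd];
    replace (0 ^ 2 + 1 ^ 2) with 1 by ring; now rewrite sqrt_1). ring.
Qed.

Lemma oscillatory_continuous M a om K x r : Ccont K r -> Ccont (oscillatory M a om K x) r.
Proof.
  intros HK. apply Ccont_mul; auto. apply Ccont_exp, Ccont_scal; [|apply Ccont_const].
  apply continuity_pt_of_ex_derive. unfold phase. auto_derive. auto.
Qed.

Lemma dx_amplitude_continuous M a om K r : Ccont K r -> Ccont (dx_amplitude M a om K) r.
Proof.
  intros HK. apply Ccont_scal; [|apply Ccont_mul; auto; apply Ccont_const].
  apply continuity_pt_of_ex_derive. unfold phase_rate. auto_derive. auto.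
Qed.

Lemma oscillatory_dx M a om K x r : rplus M a - rminus M a <> 0 ->
  Cderiv_at (fun t => oscillatory M a om K t r) x (oscillatory M a om (dx_amplitude M a om K) x r).
Proof.
  intros HL.
  assert (Hph : derivable_pt_lim (fun t => phase M a t r) x (phase_rate M a r))
    by (apply is_derive_Reals; unfold phase, phase_rate; auto_derive; auto; field; auto).
  assert (H := Cderiv_mul _ _ x _ _ (Cderiv_expo _ (Cmul Ci om) x _ Hph) (Cderiv_const (K r) x)).
  eapply Cderiv_ext; [|replace (oscillatory M a om (dx_amplitude M a om K) x r) with
                         (Cadd (Cmul (Cscal (phase_rate M a r) (Cmul (Cmul Ci om)
                            (Cexp (Cscal (phase M a x r) (Cmul Ci om))))) (K r))
                            (Cmul (Cexp (Cscal (phase M a x r) (Cmul Ci om))) (0, 0)));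
                       [exact H | apply Cpair_eq; simpl; ring]].
  reflexivity.
Qed.

Section OscillatoryIntegral.
Variables (M a : R) (om : Cx).
Hypothesis HM : 0 < M.
Hypothesis Ha : Rabs a < M.
Hypothesis Hw : 0 < snd om.

Local Notation rp := (rplus M a).
Local Notation rm := (rminus M a).
Local Notation w := (snd om).
Local Notation L := (rplus M a - rminus M a).

Definition controlled_growth (A : R) (K : R -> Cx) : Prop :=
  forall r, rp < r -> Cnorm (K r) <= A * (1 + phase_rate M a r) ^ 2 * exp (5 / 4 * w * (r - rp)).

(** The constant absorbing the polynomial weight into the exponential decay. *)
Definition weight_constant : R := (3 + 8 / (L * w)) ^ 2.

Lemma phase_lower_bound t r : rp < t -> rp < r -> 2 * (t - rm) + 2 * (r - rp) <= phase M a t r.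
Proof.
  intros Ht Hr. destruct (kerr_horizons M a HM Ha) as [_ [_ [Hlt _]]].
  unfold phase. apply (Rmult_le_reg_r L); [lra|].
  unfold Rdiv. rewrite Rmult_assoc, Rinv_l, Rmult_1_r by lra.
  assert (0 <= (r - rp) * (t - rp)) by (apply Rmult_le_pos; lra). nra.
Qed.

Lemma polynomial_weight_absorbed r : rp < r ->
  (1 + phase_rate M a r) ^ 2 * exp (- (w / 2) * (r - rp)) <= weight_constant.
Proof.
  intros Hr. destruct (kerr_horizons M a HM Ha) as [_ [_ [Hlt _]]].
  set (tau := r - rp).
  replace (1 + phase_rate M a r) with (3 + 2 * tau / L) by (unfold phase_rate, tau; field; lra).
  replace (exp (- (w / 2) * tau)) with (exp (- (w / 4) * tau) ^ 2)
    by (simpl; rewrite Rmult_1_r, <- exp_plus; f_equal; field).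
  rewrite <- Rpow_mult_distr. unfold weight_constant. apply pow_incr. split.
  - apply Rmult_le_pos; [|left; apply exp_pos].
    assert (0 <= tau / L) by (apply Rdiv_le_0_compat; unfold tau; lra). lra.
  - assert (h := linear_times_exp_bound (w / 4) tau ltac:(lra) ltac:(unfold tau; lra)).
    assert (exp (- (w / 4) * tau) <= 1) by (rewrite <- exp_0; apply exp_mono; unfold tau; nra).
    replace (8 / (L * w)) with (2 / L * / (w / 4)) by (field; lra).
    replace ((3 + 2 * tau / L) * exp (- (w / 4) * tau))
      with (3 * exp (- (w / 4) * tau) + 2 / L * (tau * exp (- (w / 4) * tau))) by (field; lra).
    assert (2 / L * (tau * exp (- (w / 4) * tau)) <= 2 / L * / (w / 4))
      by (apply Rmult_le_compat_l; [apply Rdiv_le_0_compat|]; lra).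
    lra.
Qed.

Lemma oscillatory_decay A K t r : 0 <= A -> controlled_growth A K -> rp < t -> rp < r ->
  Cnorm (oscillatory M a om K t r) <=
    A * weight_constant * exp (- 2 * w * (t - rm)) * exp (- (w / 4) * (r - rp)).
Proof.
  intros HA HK Ht Hr.
  rewrite oscillatory_norm.
  assert (Hph := phase_lower_bound t r Ht Hr).
  assert (Hwt := polynomial_weight_absorbed r Hr).
  assert (HKr := HK r Hr). unfold controlled_growth in HKr.
  set (W := (1 + phase_rate M a r) ^ 2) in *.
  set (Et := exp (- 2 * w * (t - rm))).
  assert (E1 : exp (- w * phase M a t r) <= Et * exp (- 2 * w * (r - rp)))
    by (unfold Et; rewrite <- exp_plus; apply exp_mono; nra).
  (* [-2 + 5/4 = -1/2 - 1/4]: half of the excess decay absorbs [W] *)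
  assert (E2 : exp (- 2 * w * (r - rp)) * exp (5 / 4 * w * (r - rp))
               = exp (- (w / 2) * (r - rp)) * exp (- (w / 4) * (r - rp)))
    by (rewrite <- !exp_plus; f_equal; field).
  eapply Rle_trans.
  { apply Rmult_le_compat; [left; apply exp_pos | apply Cnorm_ge0 | exact E1 | exact HKr]. }
  replace (Et * exp (- 2 * w * (r - rp)) * (A * W * exp (5 / 4 * w * (r - rp))))
    with (A * Et * exp (- (w / 4) * (r - rp)) * (W * exp (- (w / 2) * (r - rp))))
    by (transitivity (A * Et * W * (exp (- 2 * w * (r - rp)) * exp (5 / 4 * w * (r - rp))));
        [rewrite E2|]; ring).
  replace (A * weight_constant * Et * exp (- (w / 4) * (r - rp)))
    with (A * Et * exp (- (w / 4) * (r - rp)) * weight_constant) by ring.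
  apply Rmult_le_compat_l; [|exact Hwt].
  unfold Et. apply Rmult_le_pos; [apply Rmult_le_pos|]; [lra | left; apply exp_pos..].
Qed.

Lemma weight_constant_nonneg : 0 <= weight_constant.
Proof. apply pow2_ge_0. Qed.

Lemma oscillatory_integral_spec A K t : 0 <= A ->
  (forall r, rp < r -> Ccont K r) -> controlled_growth A K -> rp < t ->
  improper_integral (oscillatory M a om K t) rp (oscillatory_integral M a om K t) /\
  Cnorm (oscillatory_integral M a om K t) <=
    8 * A * weight_constant / w * exp (- 2 * w * (t - rm)).
Proof.
  intros HA Hc Hb Ht.
  set (C := A * weight_constant * exp (- 2 * w * (t - rm))).
  assert (Hmu : 0 < w / 4) by lra.
  assert (Hbd : forall r, rp < r -> Cnorm (oscillatory M a om K t r) <= C * exp (- (w / 4) * (r - rp)))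
    by (intros r Hr; now apply oscillatory_decay).
  assert (Hb1 : forall r, rp < r -> Rabs (fst (oscillatory M a om K t r)) <= C * exp (- (w / 4) * (r - rp)))
    by (intros r Hr; eapply Rle_trans; [apply Cnorm_fst | auto]).
  assert (Hb2 : forall r, rp < r -> Rabs (snd (oscillatory M a om K t r)) <= C * exp (- (w / 4) * (r - rp)))
    by (intros r Hr; eapply Rle_trans; [apply Cnorm_snd | auto]).
  assert (Hc1 : forall r, rp < r -> continuity_pt (fun r => fst (oscillatory M a om K t r)) r)
    by (intros r Hr; apply (oscillatory_continuous M a om K t r (Hc r Hr))).
  assert (Hc2 : forall r, rp < r -> continuity_pt (fun r => snd (oscillatory M a om K t r)) r)
    by (intros r Hr; apply (oscillatory_continuous M a om K t r (Hc r Hr))).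
  destruct (improper_integral_exists _ _ _ _ Hmu Hb1 Hc1) as [v1 Hv1].
  destruct (improper_integral_exists _ _ _ _ Hmu Hb2 Hc2) as [v2 Hv2].
  assert (Hspec : improper_integral (oscillatory M a om K t) rp (oscillatory_integral M a om K t))
    by (unfold oscillatory_integral, CimpInt; apply epsilon_spec; exists (v1, v2); split; auto).
  split; auto. destruct Hspec as [S1 S2].
  assert (h1 := improper_value_bound _ _ _ _ Hmu Hb1 _ S1).
  assert (h2 := improper_value_bound _ _ _ _ Hmu Hb2 _ S2).
  eapply Rle_trans; [apply Cnorm_le_sum|].
  replace (8 * A * weight_constant / w * exp (- 2 * w * (t - rm))) with (2 * (C / (w / 4)))
    by (unfold C; field; lra).
  lra.
Qed.

Lemma oscillatory_integral_bound A K t : 0 <= A ->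
  (forall r, rp < r -> Ccont K r) -> controlled_growth A K -> rp < t ->
  Cnorm (oscillatory_integral M a om K t) <=
    (8 * A * weight_constant / w * exp (2 * w * rm)) * exp (- 2 * w * t).
Proof.
  intros HA Hc Hb Ht. eapply Rle_trans; [apply (oscillatory_integral_spec A K t); auto|].
  right. replace (- 2 * w * (t - rm)) with (2 * w * rm + - 2 * w * t) by ring.
  rewrite exp_plus. ring.
Qed.

(** Each application of [dx_amplitude] costs a factor [(1 + dk/dx)(1 + |om|)]; so a bound
    [|G| <= C exp (5/4 w (r - r_+))] puts [G], [dG], [d^2 G] in one growth class. *)
Lemma dx_amplitude_le K r : rp < r ->
  Cnorm (dx_amplitude M a om K r) <= (1 + phase_rate M a r) * (1 + Cnorm om) * Cnorm (K r).
Proof.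
  intros Hr. destruct (kerr_horizons M a HM Ha) as [_ [_ [Hlt _]]].
  assert (0 <= phase_rate M a r) by (unfold phase_rate; apply Rdiv_le_0_compat; lra).
  rewrite dx_amplitude_norm, Rabs_pos_eq by lra.
  generalize (Cnorm_ge0 om) (Cnorm_ge0 (K r)). nra.
Qed.

Lemma growth_of_derivatives C G : 0 <= C ->
  (forall r, rp < r -> Cnorm (G r) <= C * exp (5 / 4 * w * (r - rp))) ->
  let A := C * (1 + Cnorm om) ^ 2 in
  controlled_growth A G /\ controlled_growth A (dx_amplitude M a om G) /\
  controlled_growth A (dx_amplitude M a om (dx_amplitude M a om G)).
Proof.
  intros HC HG A. destruct (kerr_horizons M a HM Ha) as [_ [_ [Hlt _]]].
  assert (Hk : forall r, rp < r -> 1 <= 1 + phase_rate M a r)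
    by (intros r Hr; assert (0 <= phase_rate M a r)
          by (unfold phase_rate; apply Rdiv_le_0_compat; lra); lra).
  assert (Ho : 1 <= 1 + Cnorm om) by (generalize (Cnorm_ge0 om); lra).
  unfold controlled_growth, A. repeat split; intros r Hr;
    assert (Hkr := Hk r Hr); assert (HGr := HG r Hr);
    set (E := exp (5 / 4 * w * (r - rp))) in *; set (k := 1 + phase_rate M a r) in *;
    set (o := 1 + Cnorm om) in *;
    assert (0 <= C * E) by (apply Rmult_le_pos; [lra | left; apply exp_pos]);
    assert (Hok : 1 <= o * k) by nra;
    replace (C * o ^ 2 * k ^ 2 * E) with ((o * k) * ((o * k) * (C * E))) by ring.
  - apply Rle_trans with (1 * (1 * (C * E))); [lra|].
    apply Rmult_le_compat; nra.
  - eapply Rle_trans; [apply dx_amplitude_le; lra|]. fold k o.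
    apply Rle_trans with ((o * k) * (1 * (C * E))); [|apply Rmult_le_compat_l; nra].
    replace (k * o * Cnorm (G r)) with ((o * k) * Cnorm (G r)) by ring.
    apply Rmult_le_compat_l; lra.
  - eapply Rle_trans; [apply dx_amplitude_le; lra|]. fold k o.
    assert (Hd := dx_amplitude_le G r Hr). fold k o in Hd.
    replace (k * o * Cnorm (dx_amplitude M a om G r)) with ((o * k) * Cnorm (dx_amplitude M a om G r))
      by ring.
    apply Rmult_le_compat_l; [lra|]. eapply Rle_trans; [exact Hd|].
    replace (k * o * Cnorm (G r)) with ((o * k) * Cnorm (G r)) by ring.
    apply Rmult_le_compat_l; lra.
Qed.

Lemma oscillatory_integral_derivative A K x : 0 <= A ->
  (forall r, rp < r -> Ccont K r) ->
  controlled_growth A K -> controlled_growth A (dx_amplitude M a om K) ->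
  controlled_growth A (dx_amplitude M a om (dx_amplitude M a om K)) ->
  rp < x ->
  Cderiv_at (oscillatory_integral M a om K) x
            (oscillatory_integral M a om (dx_amplitude M a om K) x).
Proof.
  intros HA Hc B0 B1 B2 Hx.
  destruct (kerr_horizons M a HM Ha) as [_ [_ [Hlt _]]].
  assert (HL : L <> 0) by lra.
  assert (Hc1 : forall r, rp < r -> Ccont (dx_amplitude M a om K) r)
    by (intros; now apply dx_amplitude_continuous, Hc).
  assert (Bd2 : forall t r, rp < t -> rp < r ->
     Cnorm (oscillatory M a om (dx_amplitude M a om (dx_amplitude M a om K)) t r)
       <= A * weight_constant * exp (- (w / 4) * (r - rp))).
  { intros t r Ht Hr. eapply Rle_trans; [exact (oscillatory_decay A _ t r HA B2 Ht Hr)|].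
    assert (exp (- 2 * w * (t - rm)) <= 1) by (rewrite <- exp_0; apply exp_mono; nra).
    assert (0 <= A * weight_constant) by (apply Rmult_le_pos; [lra | apply weight_constant_nonneg]).
    apply Rmult_le_compat_r; [left; apply exp_pos|].
    rewrite <- (Rmult_1_r (A * weight_constant)) at 2. apply Rmult_le_compat_l; lra. }
  assert (Hint := fun t Ht => proj1 (oscillatory_integral_spec A K t HA Hc B0 Ht)).
  assert (HJ := proj1 (oscillatory_integral_spec A _ x HA Hc1 B1 Hx)).
  split.
  - apply (improper_integral_derivable rp rp (A * weight_constant) (w / 4)
      (fun t r => fst (oscillatory M a om K t r))
      (fun t r => fst (oscillatory M a om (dx_amplitude M a om K) t r))
      (fun t r => fst (oscillatory M a om (dx_amplitude M a om (dx_amplitude M a om K)) t r)));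
      try lra.
    + intros t r _ _. apply (oscillatory_dx M a om K t r HL).
    + intros t r _ _. apply (oscillatory_dx M a om _ t r HL).
    + intros t r Ht Hr. eapply Rle_trans; [apply Cnorm_fst | auto].
    + intros t Ht. apply (Hint t Ht).
    + apply HJ.
  - apply (improper_integral_derivable rp rp (A * weight_constant) (w / 4)
      (fun t r => snd (oscillatory M a om K t r))
      (fun t r => snd (oscillatory M a om (dx_amplitude M a om K) t r))
      (fun t r => snd (oscillatory M a om (dx_amplitude M a om (dx_amplitude M a om K)) t r)));
      try lra.
    + intros t r _ _. apply (oscillatory_dx M a om K t r HL).
    + intros t r _ _. apply (oscillatory_dx M a om _ t r HL).
    + intros t r Ht Hr. eapply Rle_trans; [apply Cnorm_snd | auto].
    + intros t Ht. apply (Hint t Ht).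
    + apply HJ.
Qed.

End OscillatoryIntegral.

Definition horizon_exponent (M : R) (om : Cx) : Cx := Cscal (-2 * M) (Cmul Ci om).
Definition wave_exponent (om : Cx) : Cx := Cmul (Copp Ci) om.
Definition horizon_factor (M a : R) (om : Cx) (x : R) : Cx := Cexp (Cscal (ln (x - rplus M a)) (horizon_exponent M om)).
Definition wave_factor (om : Cx) (x : R) : Cx := Cexp (Cscal x (wave_exponent om)).
Definition whiting_form (M a : R) (om : Cx) (I : R -> Cx) (x : R) : Cx :=
  Cscal (sqrt (x ^ 2 + a ^ 2)) (Cmul (horizon_factor M a om x) (Cmul (wave_factor om x) (I x))).

Definition whiting_form_dx (M a : R) (om : Cx) (I I1 : R -> Cx) (x : R) : Cx :=
  Cadd (Cscal (x / sqrt (x ^ 2 + a ^ 2)) (Cmul (horizon_factor M a om x) (Cmul (wave_factor om x) (I x))))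
       (Cscal (sqrt (x ^ 2 + a ^ 2))
          (Cadd (Cmul (Cscal (/ (x - rplus M a)) (Cmul (horizon_exponent M om) (horizon_factor M a om x)))
                      (Cmul (wave_factor om x) (I x)))
                (Cmul (horizon_factor M a om x)
                      (Cadd (Cmul (Cscal 1 (Cmul (wave_exponent om) (wave_factor om x))) (I x))
                            (Cmul (wave_factor om x) (I1 x)))))).

Lemma whiting_as_form M a om m u x :
  whiting M a om m u x = whiting_form M a om (oscillatory_integral M a om (amplitude M a om m u)) x.
Proof.
  unfold whiting, whiting_form, wave_factor, wave_exponent.
  replace (Cmul (Copp Ci) (Cscal x om)) with (Cscal x (Cmul (Copp Ci) om))
    by (apply Cpair_eq; simpl; ring).
  reflexivity.
Qed.

Lemma horizon_factor_norm M a om x :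
  Cnorm (horizon_factor M a om x) = Rpower (x - rplus M a) (2 * M * snd om).
Proof. unfold horizon_factor, Rpower. rewrite Cnorm_exp. f_equal. simpl. ring. Qed.

Lemma wave_factor_norm om x : Cnorm (wave_factor om x) = exp (snd om * x).
Proof. unfold wave_factor. rewrite Cnorm_exp. f_equal. simpl. ring. Qed.

Lemma whiting_form_deriv M a om (I I1 : R -> Cx) x : 0 < rplus M a < x ->
  Cderiv_at I x (I1 x) -> Cderiv_at (whiting_form M a om I) x (whiting_form_dx M a om I I1 x).
Proof.
  intros Hx HI. assert (Hx0 : 0 < x ^ 2 + a ^ 2) by nra.
  assert (Hs : 0 < sqrt (x ^ 2 + a ^ 2)) by now apply sqrt_lt_R0.
  unfold whiting_form, whiting_form_dx.
  apply (Cderiv_scal (fun y => sqrt (y ^ 2 + a ^ 2))); [|apply Cderiv_mul; [|apply Cderiv_mul; auto]].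
  - apply is_derive_Reals. auto_derive; replace (x * (x * 1) + a * (a * 1)) with (x ^ 2 + a ^ 2) by ring;
      [lra | field; lra].
  - apply (Cderiv_expo (fun y => ln (y - rplus M a))).
    apply is_derive_Reals. auto_derive; [lra | field; lra].
  - apply (Cderiv_expo (fun y => y)), derivable_pt_lim_id.
Qed.

Lemma whiting_form_dx_norm M a om I I1 x : rplus M a < x ->
  Cnorm (whiting_form_dx M a om I I1 x) <=
    Rpower (x - rplus M a) (2 * M * snd om) * exp (snd om * x) *
    (Rabs (x / sqrt (x ^ 2 + a ^ 2)) * Cnorm (I x) + sqrt (x ^ 2 + a ^ 2) *
      (/ (x - rplus M a) * Cnorm (horizon_exponent M om) * Cnorm (I x) +
       Cnorm (wave_exponent om) * Cnorm (I x) + Cnorm (I1 x))).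
Proof.
  intros Hx. unfold whiting_form_dx.
  rewrite <- horizon_factor_norm, <- wave_factor_norm.
  assert (Hq : 0 < / (x - rplus M a)) by (apply Rinv_0_lt_compat; lra).
  set (P := horizon_factor M a om x). set (E := wave_factor om x).
  assert (h1 := Cnorm_add (Cmul (Cscal 1 (Cmul (wave_exponent om) E)) (I x)) (Cmul E (I1 x))).
  assert (h2 := Cnorm_add (Cmul (Cscal (/ (x - rplus M a)) (Cmul (horizon_exponent M om) P)) (Cmul E (I x)))
                  (Cmul P (Cadd (Cmul (Cscal 1 (Cmul (wave_exponent om) E)) (I x)) (Cmul E (I1 x))))).
  rewrite !Cnorm_mul, Cnorm_scal, !Cnorm_mul, Rabs_R1 in h1.
  rewrite !Cnorm_mul, Cnorm_scal, !Cnorm_mul, (Rabs_pos_eq (/ _)) in h2 by lra.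
  eapply Rle_trans; [apply Cnorm_add|].
  rewrite !Cnorm_scal, !Cnorm_mul, (Rabs_pos_eq (sqrt _)) by apply sqrt_pos.
  generalize (Cnorm_ge0 P) (Cnorm_ge0 E) (Cnorm_ge0 (I x)) (Cnorm_ge0 (I1 x))
    (Cnorm_ge0 (horizon_exponent M om)) (Cnorm_ge0 (wave_exponent om)) (sqrt_pos (x ^ 2 + a ^ 2))
    (Rabs_pos (x / sqrt (x ^ 2 + a ^ 2))); intros.
  assert (Cnorm P * Cnorm (Cadd (Cmul (Cscal 1 (Cmul (wave_exponent om) E)) (I x)) (Cmul E (I1 x)))
          <= Cnorm P * (1 * (Cnorm (wave_exponent om) * Cnorm E) * Cnorm (I x) + Cnorm E * Cnorm (I1 x)))
    by (apply Rmult_le_compat_l; lra).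
  set (T := Cnorm (Cadd _ (Cmul P (Cadd _ _)))) in *.
  assert (sqrt (x ^ 2 + a ^ 2) * T <= sqrt (x ^ 2 + a ^ 2) *
            (Cnorm P * Cnorm E * (/ (x - rplus M a) * Cnorm (horizon_exponent M om) * Cnorm (I x) +
             Cnorm (wave_exponent om) * Cnorm (I x) + Cnorm (I1 x))))
    by (apply Rmult_le_compat_l; nra).
  lra.
Qed.

(** The factor [Delta/(x^2+a^2)] turning [d/dx] into [d/dx^*] is at most [1], and
    it cancels the singular factor [1/(x - r_+)]. *)
Lemma dstar_factor_facts M a x : 0 < M -> Rabs a < M -> rplus M a < x ->
  let D := Delta M a x / (x ^ 2 + a ^ 2) in
  0 <= D <= 1 /\ D * / (x - rplus M a) <= / rplus M a /\ D * (x / sqrt (x ^ 2 + a ^ 2)) <= 1.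
Proof.
  intros HM Ha Hx D. destruct (kerr_horizons M a HM Ha) as [Hrp [Hrm [Hlt HD]]].
  assert (Hxa : 0 < x ^ 2 + a ^ 2) by nra.
  assert (Hprod : rplus M a * rminus M a = a ^ 2).
  { generalize (HD 0). unfold Delta. intros h. nra. }
  assert (HD1 : 0 <= D <= 1).
  { unfold D. rewrite HD. split; [apply Rdiv_le_0_compat; [apply Rmult_le_pos|]; lra|].
    apply Rle_div_l; [lra|]. generalize (HD x). unfold Delta. nra. }
  repeat split; try lra.
  - unfold D. rewrite HD.
    replace ((x - rplus M a) * (x - rminus M a) / (x ^ 2 + a ^ 2) * / (x - rplus M a))
      with ((x - rminus M a) / (x ^ 2 + a ^ 2)) by (field; lra).
    apply Rle_div_l; [lra|]. apply (Rmult_le_reg_l (rplus M a)); [lra|].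
    rewrite <- Rmult_assoc, Rinv_r, Rmult_1_l by lra. nra.
  - assert (Hs := sqrt_ge_r x a ltac:(lra)).
    assert (0 <= x / sqrt (x ^ 2 + a ^ 2) <= 1)
      by (split; [apply Rdiv_le_0_compat | apply Rle_div_l]; lra).
    rewrite <- (Rmult_1_l 1). apply Rmult_le_compat; lra.
Qed.

Lemma four_term_bound Dal Dq D s c ee J0 J1 b S k :
  0 <= Dal <= 1 -> 0 <= Dq <= k -> 0 <= D <= 1 -> 0 <= s <= S -> 0 <= c -> 0 <= ee ->
  0 <= J0 <= b -> 0 <= J1 <= b ->
  Dal * J0 + s * (Dq * c * J0 + D * ee * J0 + D * J1) <= b * (1 + S * (c * k + ee + 1)).
Proof.
  intros HDal HDq HD Hs Hc He HJ0 HJ1.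
  assert (t1 : 0 <= Dal * J0 <= 1 * b) by (split; [nra | apply mult_le_compat_nonneg; lra]).
  assert (t2 : 0 <= Dq * J0 <= k * b) by (split; [nra | apply mult_le_compat_nonneg; lra]).
  assert (t3 : 0 <= D * J0 <= 1 * b) by (split; [nra | apply mult_le_compat_nonneg; lra]).
  assert (t4 : 0 <= D * J1 <= 1 * b) by (split; [nra | apply mult_le_compat_nonneg; lra]).
  assert (c * (Dq * J0) <= c * (k * b)) by (apply Rmult_le_compat_l; lra).
  assert (ee * (D * J0) <= ee * (1 * b)) by (apply Rmult_le_compat_l; lra).
  assert (s * (c * (Dq * J0) + ee * (D * J0) + D * J1) <= S * (c * (k * b) + ee * (1 * b) + 1 * b))
    by (apply mult_le_compat_nonneg; split; nra).
  replace (Dq * c * J0 + D * ee * J0 + D * J1) with (c * (Dq * J0) + ee * (D * J0) + D * J1) by ring.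
  nra.
Qed.

Lemma profile_estimates rp k p C (f : R -> Cx) : 0 < rp -> 0 < k -> 0 <= p ->
  (forall x, rp < x -> Cnorm (f x) <= C * (Rpower (x - rp) p * ((1 + x) * exp (- k * x)))) ->
  bigO_horizon rp p f /\ bigO_infinity rp k (1 + p) f.
Proof.
  intros Hrp Hk Hp Hf.
  assert (HC : 0 <= C).
  { assert (h := Hf (rp + 1) ltac:(lra)).
    assert (0 < Rpower (rp + 1 - rp) p * ((1 + (rp + 1)) * exp (- k * (rp + 1))))
      by (apply Rmult_lt_0_compat; [apply exp_pos | apply Rmult_lt_0_compat; [lra | apply exp_pos]]).
    generalize (Cnorm_ge0 (f (rp + 1))). nra. }
  split.
  - exists (C * (2 + rp)), 1. split; [lra|]. intros x Hx.
    eapply Rle_trans; [apply Hf; lra|].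
    assert (HR : 0 < Rpower (x - rp) p) by apply exp_pos.
    assert (exp (- k * x) <= 1) by (rewrite <- exp_0; apply exp_mono; nra).
    assert ((1 + x) * exp (- k * x) <= 2 + rp)
      by (apply Rle_trans with ((2 + rp) * 1); [apply mult_le_compat_nonneg;
            split; try (left; apply exp_pos); lra | lra]).
    replace (C * (2 + rp) * Rpower (x - rp) p) with (C * (Rpower (x - rp) p * (2 + rp))) by ring.
    apply Rmult_le_compat_l; [exact HC|]. apply Rmult_le_compat_l; lra.
  - exists (2 * C), (rp + 1). intros x Hx _.
    eapply Rle_trans; [apply Hf; lra|].
    rewrite Rpower_plus, Rpower_1 by lra.
    assert (HR : 0 <= Rpower (x - rp) p <= Rpower x p)
      by (split; [left; apply exp_pos | apply Rle_Rpower_l; lra]).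
    replace (2 * C * (exp (- k * x) * (x * Rpower x p)))
      with (C * (Rpower x p * (2 * x * exp (- k * x)))) by ring.
    apply Rmult_le_compat_l; [exact HC|]. apply mult_le_compat_nonneg; [exact HR|].
    split; [apply Rmult_le_pos; [lra | left; apply exp_pos]|].
    apply Rmult_le_compat_r; [left; apply exp_pos | lra].
Qed.

Section WhitingForm.
Variables (M a : R) (om : Cx) (I I1 : R -> Cx) (B : R).
Hypothesis HM : 0 < M.
Hypothesis Ha : Rabs a < M.
Hypothesis Hw : 0 < snd om.
Hypothesis I_bound : forall x, rplus M a < x -> Cnorm (I x) <= B * exp (- 2 * snd om * x).
Hypothesis I1_bound : forall x, rplus M a < x -> Cnorm (I1 x) <= B * exp (- 2 * snd om * x).

Local Notation rp := (rplus M a).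
Local Notation w := (snd om).
Local Notation p := (2 * M * snd om).

Lemma sqrt_le_linear x : 0 < x -> sqrt (x ^ 2 + a ^ 2) <= (1 + Rabs a) * (1 + x).
Proof.
  intros Hx. assert (Habs := Rabs_pos a).
  rewrite <- (sqrt_pow2 ((1 + Rabs a) * (1 + x))) by nra.
  apply sqrt_le_1_alt. rewrite <- (pow2_abs a). nra.
Qed.

Lemma wave_times_bounded J x : rp < x -> Cnorm (J x) <= B * exp (- 2 * w * x) ->
  0 <= exp (w * x) * Cnorm (J x) <= B * exp (- w * x).
Proof.
  intros Hx HJ. split; [apply Rmult_le_pos; [left; apply exp_pos | apply Cnorm_ge0]|].
  replace (B * exp (- w * x)) with (exp (w * x) * (B * exp (- 2 * w * x)))
    by (replace (- w * x) with (w * x + - 2 * w * x) by ring; rewrite exp_plus; ring).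
  apply Rmult_le_compat_l; [left; apply exp_pos | exact HJ].
Qed.

Lemma whiting_form_profile x : rp < x ->
  Cnorm (whiting_form M a om I x) <=
    B * (1 + Rabs a) * (Rpower (x - rp) p * ((1 + x) * exp (- w * x))).
Proof.
  intros Hx. destruct (kerr_horizons M a HM Ha) as [Hrp _].
  unfold whiting_form. rewrite Cnorm_scal, !Cnorm_mul, horizon_factor_norm, wave_factor_norm.
  rewrite Rabs_pos_eq by apply sqrt_pos.
  assert (Hs := sqrt_le_linear x ltac:(lra)). assert (HW := wave_times_bounded I x Hx (I_bound x Hx)).
  assert (HR : 0 <= Rpower (x - rp) p) by (left; apply exp_pos).
  replace (B * (1 + Rabs a) * (Rpower (x - rp) p * ((1 + x) * exp (- w * x))))
    with ((1 + Rabs a) * (1 + x) * (Rpower (x - rp) p * (B * exp (- w * x)))) by ring.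
  apply mult_le_compat_nonneg; [split; [apply sqrt_pos | exact Hs]|].
  split; [apply Rmult_le_pos; lra|]. apply Rmult_le_compat_l; lra.
Qed.

Lemma whiting_form_dx_profile x : rp < x ->
  Cnorm (Cscal (Delta M a x / (x ^ 2 + a ^ 2)) (whiting_form_dx M a om I I1 x)) <=
    B * (1 + (1 + Rabs a) * (Cnorm (horizon_exponent M om) * / rp + Cnorm (wave_exponent om) + 1)) *
    (Rpower (x - rp) p * ((1 + x) * exp (- w * x))).
Proof.
  intros Hx. destruct (kerr_horizons M a HM Ha) as [Hrp _].
  destruct (dstar_factor_facts M a x HM Ha Hx) as [HD [HDq HDal]].
  set (D := Delta M a x / (x ^ 2 + a ^ 2)) in *.
  set (s := sqrt (x ^ 2 + a ^ 2)) in *.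
  assert (Hal : 0 <= x / s) by (apply Rdiv_le_0_compat; [lra | unfold s; apply sqrt_lt_R0; nra]).
  assert (Hq : 0 < / (x - rp)) by (apply Rinv_0_lt_compat; lra).
  assert (HW0 := wave_times_bounded I x Hx (I_bound x Hx)).
  assert (HW1 := wave_times_bounded I1 x Hx (I1_bound x Hx)).
  assert (HR : 0 <= Rpower (x - rp) p) by (left; apply exp_pos).
  assert (Hs : 0 <= s <= (1 + Rabs a) * (1 + x)) by (split; [apply sqrt_pos | apply sqrt_le_linear; lra]).
  assert (Hb := four_term_bound (D * (x / s)) (D * / (x - rp)) D s (Cnorm (horizon_exponent M om))
    (Cnorm (wave_exponent om)) _ _ (B * exp (- w * x)) ((1 + Rabs a) * (1 + x)) (/ rp)
    ltac:(split; [apply Rmult_le_pos|]; lra) ltac:(split; [apply Rmult_le_pos|]; lra) HD Hs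
    (Cnorm_ge0 _) (Cnorm_ge0 _) HW0 HW1).
  rewrite Cnorm_scal, Rabs_pos_eq by lra.
  eapply Rle_trans; [apply Rmult_le_compat_l; [lra | apply whiting_form_dx_norm; exact Hx]|].
  fold s. rewrite Rabs_pos_eq by exact Hal.
  set (Z := Cnorm (horizon_exponent M om) * / rp + Cnorm (wave_exponent om) + 1).
  assert (HZ : 0 <= Z)
    by (unfold Z; generalize (Cnorm_ge0 (horizon_exponent M om)) (Cnorm_ge0 (wave_exponent om));
        assert (0 < / rp) by (apply Rinv_0_lt_compat; lra); nra).
  replace (D * (Rpower (x - rp) p * exp (w * x) *
             (x / s * Cnorm (I x) + s * (/ (x - rp) * Cnorm (horizon_exponent M om) * Cnorm (I x) +
              Cnorm (wave_exponent om) * Cnorm (I x) + Cnorm (I1 x)))))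
    with (Rpower (x - rp) p *
          (D * (x / s) * (exp (w * x) * Cnorm (I x)) +
           s * (D * / (x - rp) * Cnorm (horizon_exponent M om) * (exp (w * x) * Cnorm (I x)) +
                D * Cnorm (wave_exponent om) * (exp (w * x) * Cnorm (I x)) +
                D * (exp (w * x) * Cnorm (I1 x))))) by ring.
  replace (Cnorm (horizon_exponent M om) * / rp + Cnorm (wave_exponent om) + 1) with Z in Hb
    by (unfold Z; ring).
  replace (B * (1 + (1 + Rabs a) * Z) * (Rpower (x - rp) p * ((1 + x) * exp (- w * x))))
    with (Rpower (x - rp) p * ((B * exp (- w * x)) * ((1 + x) * (1 + (1 + Rabs a) * Z)))) by ring.
  apply Rmult_le_compat_l; [exact HR|]. eapply Rle_trans; [exact Hb|].
  apply Rmult_le_compat_l; [lra|]. generalize (Rabs_pos a). nra.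
Qed.

Hypothesis I_deriv : forall x, rp < x -> Cderiv_at I x (I1 x).

Lemma whiting_form_estimates rstar : tortoise M a rstar ->
  bigO_horizon rp p (whiting_form M a om I) /\
  bigO_infinity rp w (1 + p) (whiting_form M a om I) /\
  exists ud : R -> Cx,
    dstar rstar rp (whiting_form M a om I) ud /\
    bigO_horizon rp p ud /\ bigO_infinity rp w (1 + p) ud.
Proof.
  intros Ht. destruct (kerr_horizons M a HM Ha) as [Hrp _].
  assert (Hp : 0 <= p) by (apply Rmult_le_pos; lra).
  destruct (profile_estimates rp w p _ (whiting_form M a om I) Hrp Hw Hp whiting_form_profile)
    as [H1 H2].
  set (ud := fun x => Cscal (Delta M a x / (x ^ 2 + a ^ 2)) (whiting_form_dx M a om I I1 x)).
  destruct (profile_estimates rp w p _ ud Hrp Hw Hp whiting_form_dx_profile) as [H3 H4].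
  repeat split; auto. exists ud. repeat split; auto.
  apply (dstar_of_deriv M a rstar _ _ HM Ha Ht).
  intros x Hx. apply whiting_form_deriv; [lra | now apply I_deriv].
Qed.

End WhitingForm.

Theorem mainTheorem7 (M a : R) (rstar : R -> R) (om lam : Cx) (m : Z) (F u : R -> Cx) :
  0 < M -> Rabs a < M ->
  tortoise M a rstar ->
  smooth_on_right (rplus M a) F ->
  compact_support_right (rplus M a) F ->
  radial_ode M a rstar om m lam F u ->
  bc_horizon M a om m u ->
  bc_infinity M a rstar om u ->
  0 < snd om ->
  bigO_horizon (rplus M a) (2 * M * snd om) (whiting M a om m u) /\
  bigO_infinity (rplus M a) (snd om) (1 + 2 * M * snd om) (whiting M a om m u) /\
  exists ud : R -> Cx,
    dstar rstar (rplus M a) (whiting M a om m u) ud /\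
    bigO_horizon (rplus M a) (2 * M * snd om) ud /\
    bigO_infinity (rplus M a) (snd om) (1 + 2 * M * snd om) ud.
Proof.
  intros HM Ha Ht _ _ [u1 [_ [Hu1 _]]] Hh Hi Hw.
  assert (Hu := continuity_of_dstar _ _ _ _ (tortoise_continuous M a rstar Ht) (proj1 (proj2 Ht)) Hu1).
  destruct (amplitude_bound M a om m u HM Ha Hw rstar Ht Hu Hh Hi) as [C [HC HG]].
  set (G := amplitude M a om m u) in *.
  destruct (growth_of_derivatives M a om HM Ha C G HC HG) as [B0 [B1 B2]].
  set (A := C * (1 + Cnorm om) ^ 2) in *.
  assert (HA : 0 <= A) by (apply Rmult_le_pos; [exact HC | apply pow2_ge_0]).
  assert (HGc := amplitude_continuous M a om m u HM Ha Hu).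
  assert (HG1c : forall r, rplus M a < r -> Ccont (dx_amplitude M a om G) r)
    by (intros; now apply dx_amplitude_continuous, HGc).
  replace (whiting M a om m u) with (whiting_form M a om (oscillatory_integral M a om G))
    by (apply functional_extensionality; intros x; symmetry; apply whiting_as_form).
  apply (whiting_form_estimates M a om _ (oscillatory_integral M a om (dx_amplitude M a om G))
           (8 * A * weight_constant M a om / snd om * exp (2 * snd om * rminus M a)));
    auto; intros x Hx.
  - now apply oscillatory_integral_bound.
  - now apply oscillatory_integral_bound.
  - now apply (oscillatory_integral_derivative M a om HM Ha Hw A).
Qed.
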